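(* Let $\mathcal L$ be a sibling $\sigma_d$-invariant lamination and let $\mathcal L^p$ be its perfect part. Then $\mathcal L^p$ is a sibling $\sigma_d$-invariant lamination. If $\mathcal L$ is uncountable, then $\mathcal L^p\subset\mathcal L$ is nonempty. Every chief is either perfect or countable; in the latter case all its nondegenerate leaves are isolated.
   Context: $\mathbb S$ is the unit circle, $\sigma_d(z)=z^d$, $d\ge2$. A chord $\overline{ab}$ joins $a,b\in\mathbb S$; distinct chords cross if they meet in the open unit disk; a chord is critical if $a\ne b$ and $\sigma_d(a)=\sigma_d(b)$. A lamination is a family of pairwise non-crossing chords (leaves) containing all points of $\mathbb S$, whose union is closed; it is sibling $\sigma_d$-invariant if (1) images of leaves are leaves; (2) every leaf is the image of a leaf; (3) every non-critical leaf $\ell$ belongs to $d$ pairwise disjoint leaves $\ell_1=\ell,\dots,\ell_d$ with equal images. All laminations are assumed sibling $\sigma_d$-invariant. A lamination is nonempty if it has a nondegenerate leaf, countable if it has countably many nondegenerate leaves, uncountable otherwise, perfect if no nondegenerate leaf is isolated (isolated = not a Hausdorff limit of other leaves). The perfect part $\mathcal L^p$ is the maximal (by inclusion) perfect sublamination of $\mathcal L$, equivalently the set of leaves $\ell\in\mathcal L$ such that arbitrarily close to $\ell$ there are uncountably many leaves of $\mathcal L$. A chief is a nonempty sibling $\sigma_d$-invariant lamination minimal by inclusion among such. *)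

From Stdlib Require Import Reals Lra Lia.
Open Scope R_scope.

Definition pt : Type := (R * R)%type.

Definition on_circle (z : pt) : Prop := fst z * fst z + snd z * snd z = 1.
Definition in_open_disk (z : pt) : Prop := fst z * fst z + snd z * snd z < 1.

(* complex multiplication and power, sigma_d(z) = z^d *)
Definition cmul (z w : pt) : pt :=
  (fst z * fst w - snd z * snd w, fst z * snd w + snd z * fst w).
Fixpoint cpow (z : pt) (n : nat) : pt :=
  match n with O => (1, 0) | S m => cmul z (cpow z m) end.
Definition sigma (d : nat) (z : pt) : pt := cpow z d.

Definition dist (z w : pt) : R :=
  sqrt ((fst z - fst w) * (fst z - fst w) + (snd z - snd w) * (snd z - snd w)).

Definition seg (a b z : pt) : Prop :=
  exists t, 0 <= t <= 1 /\
    z = ((1 - t) * fst a + t * fst b, (1 - t) * snd a + t * snd b).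

(* chords are unordered pairs of endpoints *)
Definition same_chord (a b c e : pt) : Prop :=
  (a = c /\ b = e) \/ (a = e /\ b = c).

Definition cross (a b c e : pt) : Prop :=
  ~ same_chord a b c e /\
  exists z, in_open_disk z /\ seg a b z /\ seg c e z.

Definition critical (d : nat) (a b : pt) : Prop :=
  a <> b /\ sigma d a = sigma d b.

Definition disjoint_chords (l1 l2 : pt * pt) : Prop :=
  ~ exists z, seg (fst l1) (snd l1) z /\ seg (fst l2) (snd l2) z.

Definition closed_set (U : pt -> Prop) : Prop :=
  forall z, (forall eps, 0 < eps -> exists w, U w /\ dist z w < eps) -> U z.

(* A lamination is given by the (symmetric) relation  L a b  <-> the chord ab is a leaf. *)
Definition lam_union (L : pt -> pt -> Prop) (z : pt) : Prop :=
  exists a b, L a b /\ seg a b z.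

Definition lamination (L : pt -> pt -> Prop) : Prop :=
  (forall a b, L a b -> L b a) /\
  (forall a b, L a b -> on_circle a /\ on_circle b) /\
  (forall a, on_circle a -> L a a) /\
  (forall a b c e, L a b -> L c e -> ~ cross a b c e) /\
  closed_set (lam_union L).

Definition sibling_invariant (d : nat) (L : pt -> pt -> Prop) : Prop :=
  lamination L /\
  (forall a b, L a b -> L (sigma d a) (sigma d b)) /\
  (forall a b, L a b -> exists c e, L c e /\ sigma d c = a /\ sigma d e = b) /\
  (forall a b, L a b -> ~ critical d a b ->
     exists f : nat -> pt * pt,
       f O = (a, b) /\
       (forall i, (i < d)%nat -> L (fst (f i)) (snd (f i))) /\
       (forall i j, (i < d)%nat -> (j < d)%nat -> i <> j -> disjoint_chords (f i) (f j)) /\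
       (forall i, (i < d)%nat ->
          same_chord (sigma d (fst (f i))) (sigma d (snd (f i))) (sigma d a) (sigma d b))).

(* Hausdorff distance between the chords ab and ce is < eps *)
Definition hclose (eps : R) (a b c e : pt) : Prop :=
  (forall z, seg a b z -> exists w, seg c e w /\ dist z w < eps) /\
  (forall w, seg c e w -> exists z, seg a b z /\ dist z w < eps).

Definition countable_chords (S : pt -> pt -> Prop) : Prop :=
  exists en : nat -> pt * pt,
    forall a b, S a b -> exists n, same_chord a b (fst (en n)) (snd (en n)).

Definition countable_lam (L : pt -> pt -> Prop) : Prop :=
  countable_chords (fun a b => L a b /\ a <> b).

Definition nonempty_lam (L : pt -> pt -> Prop) : Prop :=
  exists a b, L a b /\ a <> b.

Definition hlimit_of_others (L : pt -> pt -> Prop) (a b : pt) : Prop :=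
  forall eps, 0 < eps -> exists c e, L c e /\ ~ same_chord a b c e /\ hclose eps a b c e.

Definition isolated (L : pt -> pt -> Prop) (a b : pt) : Prop :=
  ~ hlimit_of_others L a b.

Definition perfect (L : pt -> pt -> Prop) : Prop :=
  forall a b, L a b -> a <> b -> ~ isolated L a b.

Definition perfect_part (L : pt -> pt -> Prop) (a b : pt) : Prop :=
  L a b /\
  forall eps, 0 < eps -> ~ countable_chords (fun c e => L c e /\ hclose eps a b c e).

Definition chief (d : nat) (L : pt -> pt -> Prop) : Prop :=
  sibling_invariant d L /\ nonempty_lam L /\
  forall L' : pt -> pt -> Prop,
    sibling_invariant d L' -> nonempty_lam L' ->
    (forall a b, L' a b -> L a b) -> forall a b, L a b -> L' a b.

From Pilot Require Import Defs.
From Stdlib Require Import Reals.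
Open Scope R_scope.

From Stdlib Require Import Lra Lia Psatz Classical ClassicalEpsilon
  FunctionalExtensionality PropExtensionality Cantor ZArith.
(* Re-imported so that [dist] denotes the Euclidean distance of Defs rather
   than the metric-space distance exported by Reals. *)
From Pilot Require Import Defs.

(* A leaf is handled as an ordered pair of endpoints (a "chord"), compared up
   to reversal with [same] and measured by the endpoint distance [rho]; for
   chords of the circle, [rho] and the Hausdorff distance of the definitions
   control each other (rho_hclose, hclose_rho_eps).

   The argument is uniform in a notion of smallness for families of chords
   (record [smallness]), instantiated by "countable" and by "finite".  A leaf
   of L is thick when every neighbourhood of it contains a non-small family
   of leaves: countably-thick leaves form the perfect part, finitely-thick
   leaves are the non-isolated leaves.

   The theorem follows: a chief contains, hence equals, its perfect part when
   it is uncountable, and its non-isolated part when it has a non-isolated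
   nondegenerate leaf, which the Baire argument excludes when it is
   countable. *)

(** * Plane geometry *)

Definition norm2 (z : pt) : R := fst z * fst z + snd z * snd z.
Definition dist2 (z w : pt) : R :=
  (fst z - fst w) * (fst z - fst w) + (snd z - snd w) * (snd z - snd w).
Definition cconj (z : pt) : pt := (fst z, - snd z).
Definition one : pt := (1, 0).
Definition origin : pt := (0, 0).

Lemma pt_eq (z w : pt) : fst z = fst w -> snd z = snd w -> z = w.
Proof. destruct z, w; simpl; intros; subst; reflexivity. Qed.

Lemma sumsq0 x y : x * x + y * y = 0 -> x = 0 /\ y = 0.
Proof.
  intro H. assert (x * x = 0) by nra. assert (y * y = 0) by nra.
  split; apply Rsqr_0_uniq; unfold Rsqr; assumption.
Qed.

Lemma dist2_nonneg z w : 0 <= dist2 z w.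
Proof. unfold dist2; apply Rplus_le_le_0_compat; apply Rle_0_sqr. Qed.

Lemma norm2_nonneg z : 0 <= norm2 z.
Proof. unfold norm2; apply Rplus_le_le_0_compat; apply Rle_0_sqr. Qed.

Lemma dist2_eq0 z w : dist2 z w = 0 -> z = w.
Proof. unfold dist2. intro H. apply sumsq0 in H. apply pt_eq; lra. Qed.

Lemma dist_nonneg z w : 0 <= dist z w.
Proof. apply sqrt_pos. Qed.

Lemma dist_sym z w : dist z w = dist w z.
Proof. unfold dist. f_equal. ring. Qed.

Lemma dist_refl z : dist z z = 0.
Proof. unfold dist. replace (_ + _) with 0 by ring. apply sqrt_0. Qed.

Lemma dist_sq z w : dist z w * dist z w = dist2 z w.
Proof. apply sqrt_sqrt, dist2_nonneg. Qed.

Lemma dist_eq0 z w : dist z w = 0 -> z = w.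
Proof. intro H. apply dist2_eq0. rewrite <- dist_sq, H. ring. Qed.

Lemma dist_pos z w : z <> w -> 0 < dist z w.
Proof.
  intro hzw. destruct (Rle_lt_or_eq_dec _ _ (dist_nonneg z w)) as [h|h]; auto.
  exfalso. apply hzw, dist_eq0. auto.
Qed.

Lemma dist_lt_dist2 z w e : 0 < e -> dist2 z w < e * e -> dist z w < e.
Proof.
  intros He H. unfold dist. rewrite <- (sqrt_square e) by lra.
  apply sqrt_lt_1_alt. split; [apply dist2_nonneg | exact H].
Qed.

Lemma dist_le_dist2 z w e : 0 <= e -> dist2 z w <= e * e -> dist z w <= e.
Proof.
  intros He H. unfold dist. rewrite <- (sqrt_square e) by lra.
  apply sqrt_le_1_alt. exact H.
Qed.

Lemma dist_triangle x y z : dist x z <= dist x y + dist y z.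
Proof.
  assert (h1 := dist_sq x y). assert (h2 := dist_sq y z). assert (h3 := dist_sq x z).
  assert (p1 := dist_nonneg x y). assert (p2 := dist_nonneg y z).
  set (a := dist x y) in *. set (b := dist y z) in *. set (c := dist x z) in *.
  unfold dist2 in *.
  set (u1 := fst x - fst y) in *. set (u2 := snd x - snd y) in *.
  set (v1 := fst y - fst z) in *. set (v2 := snd y - snd z) in *.
  replace (fst x - fst z) with (u1 + v1) in h3 by (unfold u1, v1; ring).
  replace (snd x - snd z) with (u2 + v2) in h3 by (unfold u2, v2; ring).
  (* Cauchy-Schwarz, via the Lagrange identity *)
  assert (CS : u1 * v1 + u2 * v2 <= a * b).
  { assert ((u1*v1+u2*v2)*(u1*v1+u2*v2) <= (a*b)*(a*b)).
    { replace ((a*b)*(a*b)) with ((a*a)*(b*b)) by ring. rewrite h1, h2.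
      assert (E : (u1*u1+u2*u2)*(v1*v1+v2*v2) - (u1*v1+u2*v2)*(u1*v1+u2*v2)
                  = (u1*v2-u2*v1)*(u1*v2-u2*v1)) by ring.
      assert (0 <= (u1*v2-u2*v1)*(u1*v2-u2*v1)) by apply Rle_0_sqr. lra. }
    assert (0 <= a * b) by nra. nra. }
  assert (0 <= dist x z) by apply dist_nonneg. nra.
Qed.

Lemma dist_triangle3 a b c e : dist a e <= dist a b + dist b c + dist c e.
Proof. assert (h1 := dist_triangle a b e). assert (h2 := dist_triangle b c e). lra. Qed.

Lemma abs_le_of_sq x e : 0 <= e -> x * x <= e * e -> Rabs x <= e.
Proof. intros h1 h2. apply Rabs_le. split; nra. Qed.

Lemma abs_le_split x a : Rabs x <= a -> - a <= x <= a.
Proof. intro h. assert (h1 := Rle_abs x). assert (h2 := Rle_abs (- x)). rewrite Rabs_Ropp in h2. lra. Qed.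

Lemma abs_fst_le z w : Rabs (fst z - fst w) <= dist z w.
Proof.
  apply abs_le_of_sq. apply dist_nonneg. rewrite dist_sq; unfold dist2.
  assert (h := Rle_0_sqr (snd z - snd w)); unfold Rsqr in h; lra.
Qed.

Lemma abs_snd_le z w : Rabs (snd z - snd w) <= dist z w.
Proof.
  apply abs_le_of_sq. apply dist_nonneg. rewrite dist_sq; unfold dist2.
  assert (h := Rle_0_sqr (fst z - fst w)); unfold Rsqr in h; lra.
Qed.

Lemma sq_abs_eq x : Rabs x * Rabs x = x * x.
Proof. rewrite <- Rabs_mult. apply Rabs_pos_eq. apply Rle_0_sqr. Qed.

Lemma dist_le_abs z w : dist z w <= Rabs (fst z - fst w) + Rabs (snd z - snd w).
Proof.
  assert (h1 := Rabs_pos (fst z - fst w)). assert (h2 := Rabs_pos (snd z - snd w)).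
  apply dist_le_dist2; [lra|]. unfold dist2.
  rewrite <- (sq_abs_eq (fst z - fst w)), <- (sq_abs_eq (snd z - snd w)). nra.
Qed.

Lemma cmul_comm z w : cmul z w = cmul w z.
Proof. apply pt_eq; simpl; ring. Qed.

Lemma cmul_assoc z w u : cmul z (cmul w u) = cmul (cmul z w) u.
Proof. apply pt_eq; simpl; ring. Qed.

Lemma cmul_one z : cmul z one = z.
Proof. apply pt_eq; simpl; ring. Qed.

Lemma norm2_cmul z w : norm2 (cmul z w) = norm2 z * norm2 w.
Proof. unfold norm2; simpl; ring. Qed.

Lemma dist_cmul a x y : on_circle a -> dist (cmul a x) (cmul a y) = dist x y.
Proof.
  unfold on_circle. intro h. unfold dist. f_equal.
  transitivity ((fst a * fst a + snd a * snd a) * dist2 x y); [unfold dist2; simpl; ring|].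
  rewrite h. unfold dist2. ring.
Qed.

Lemma on_circle_cmul z w : on_circle z -> on_circle w -> on_circle (cmul z w).
Proof. unfold on_circle. intros h1 h2. fold (norm2 (cmul z w)). rewrite norm2_cmul. unfold norm2. rewrite h1, h2. ring. Qed.

Lemma on_circle_one : on_circle one.
Proof. unfold on_circle, one; simpl; ring. Qed.

Lemma on_circle_conj z : on_circle z -> on_circle (cconj z).
Proof. unfold on_circle; simpl; intro; lra. Qed.

Lemma on_circle_cpow z n : on_circle z -> on_circle (cpow z n).
Proof.
  intro h. induction n; simpl. apply on_circle_one. apply on_circle_cmul; auto.
Qed.

Lemma cpow_cmul z w n : cpow (cmul z w) n = cmul (cpow z n) (cpow w n).
Proof. induction n; simpl. apply pt_eq; simpl; ring. rewrite IHn. apply pt_eq; simpl; ring. Qed.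

Lemma cpow_one n : cpow one n = one.
Proof. induction n; simpl. reflexivity. rewrite IHn. apply pt_eq; simpl; ring. Qed.

Lemma cmul_conj z : on_circle z -> cmul (cconj z) z = one.
Proof. intro h. unfold on_circle in h. apply pt_eq; simpl; nra. Qed.

Lemma cmul_cancel a x y : on_circle a -> cmul a x = cmul a y -> x = y.
Proof.
  intros ha h. assert (E := f_equal (cmul (cconj a)) h).
  rewrite !cmul_assoc, cmul_conj in E by exact ha.
  rewrite (cmul_comm one x), (cmul_comm one y), !cmul_one in E. exact E.
Qed.

Lemma cpow_lipschitz z w n : on_circle z -> on_circle w ->
  dist (cpow z n) (cpow w n) <= INR n * dist z w.
Proof.
  intros hz hw. induction n.
  - simpl. rewrite dist_refl. lra.
  - simpl cpow. rewrite S_INR.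
    eapply Rle_trans. apply (dist_triangle _ (cmul z (cpow w n))).
    rewrite dist_cmul by exact hz.
    rewrite (cmul_comm z (cpow w n)), (cmul_comm w (cpow w n)).
    rewrite dist_cmul by (apply on_circle_cpow; exact hw). lra.
Qed.

(** If u^d = 1 with u near 1, then
    0 = u^d - 1 = (u - 1)(1 + u + ... + u^(d-1)) and the geometric sum has
    positive real part, so u = 1. *)

Fixpoint geom_sum (u : pt) (n : nat) : pt :=
  match n with
  | O => origin
  | S m => (fst (geom_sum u m) + fst (cpow u m), snd (geom_sum u m) + snd (cpow u m))
  end.

Lemma geom_sum_identity u n :
  (fst (cpow u n) - 1, snd (cpow u n)) = cmul (fst u - 1, snd u) (geom_sum u n).
Proof.
  induction n; [apply pt_eq; simpl; ring|].
  assert (h1 := f_equal fst IHn). assert (h2 := f_equal snd IHn). simpl in h1, h2.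
  apply pt_eq; simpl; nra.
Qed.

Lemma cpow_re_pos u d m : on_circle u -> dist u one < 1 / INR d -> (m < d)%nat ->
  0 < fst (cpow u m).
Proof.
  intros hu hdist hm.
  assert (L := cpow_lipschitz u one m hu on_circle_one). rewrite cpow_one in L.
  assert (A := abs_fst_le (cpow u m) one). simpl fst in A at 2. apply abs_le_split in A.
  assert (Hm : INR m + 1 <= INR d) by (rewrite <- S_INR; apply le_INR; lia).
  assert (Dpos : 0 < INR d) by (assert (h := pos_INR m); lra).
  assert (dist u one * INR d < 1).
  { apply (Rmult_lt_compat_r (INR d)) in hdist; [|lra].
    unfold Rdiv in hdist. rewrite Rmult_assoc, Rinv_l in hdist by lra. lra. }
  assert (0 <= dist u one) by apply dist_nonneg. nra.
Qed.

Lemma geom_sum_re_pos u d : on_circle u -> dist u one < 1 / INR d ->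
  forall m, (m <= d)%nat -> (1 <= m)%nat -> 0 < fst (geom_sum u m).
Proof.
  intros hu hdist. induction m as [|m IH]; intros hm h1; [lia|].
  assert (P := cpow_re_pos u d m hu hdist ltac:(lia)). simpl.
  destruct m as [|m]; [simpl; lra|]. assert (IH' := IH ltac:(lia) ltac:(lia)). lra.
Qed.

Lemma sigma_locally_injective d z w : (1 <= d)%nat -> on_circle z -> on_circle w ->
  dist z w < 1 / INR d -> sigma d z = sigma d w -> z = w.
Proof.
  intros hd hz hw hdist hs.
  set (u := cmul (cconj z) w).
  assert (hu : on_circle u) by (apply on_circle_cmul; [apply on_circle_conj|]; assumption).
  assert (zu : cmul z u = w).
  { unfold u. rewrite cmul_assoc, (cmul_comm z (cconj z)), cmul_conj by exact hz.
    rewrite cmul_comm, cmul_one. reflexivity. }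
  assert (du : dist u one < 1 / INR d).
  { rewrite <- (dist_cmul z u one hz), zu, cmul_one, dist_sym. exact hdist. }
  assert (pu : cpow u d = one).
  { unfold sigma in hs. rewrite <- zu, cpow_cmul in hs.
    rewrite <- (cmul_one (cpow z d)) in hs at 1.
    symmetry. apply (cmul_cancel _ _ _ (on_circle_cpow z d hz) hs). }
  clearbody u. assert (G := geom_sum_identity u d). rewrite pu in G. simpl in G.
  assert (P := geom_sum_re_pos u d hu du d (le_n d) hd).
  assert (g1 := f_equal fst G). assert (g2 := f_equal snd G). simpl in g1, g2.
  set (s1 := fst (geom_sum u d)) in *. set (s2 := snd (geom_sum u d)) in *.
  (* (u - 1) * s = 0 with s <> 0 forces u = 1 *)
  assert (e1 : (fst u - 1) * s1 - snd u * s2 = 0) by lra.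
  assert (e2 : (fst u - 1) * s2 + snd u * s1 = 0) by lra.
  assert (E1 : (fst u - 1) * (s1 * s1 + s2 * s2) = 0).
  { transitivity (s1 * ((fst u - 1) * s1 - snd u * s2) + s2 * ((fst u - 1) * s2 + snd u * s1));
      [ring|rewrite e1, e2; ring]. }
  assert (E2 : snd u * (s1 * s1 + s2 * s2) = 0).
  { transitivity (s1 * ((fst u - 1) * s2 + snd u * s1) - s2 * ((fst u - 1) * s1 - snd u * s2));
      [ring|rewrite e1, e2; ring]. }
  assert (pos : 0 < s1 * s1 + s2 * s2) by nra.
  apply Rmult_integral in E1, E2.
  assert (u1 : u = one) by (apply pt_eq; unfold one; simpl; destruct E1, E2; lra).
  rewrite <- zu, u1, cmul_one. reflexivity.
Qed.

(** * Chords *)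

(* A chord is an ordered pair of endpoints; [same] identifies a chord with
   its reversal, and [rho] is the endpoint distance up to reversal. *)
Definition chord : Type := (pt * pt)%type.
Definition swap (x : chord) : chord := (snd x, fst x).
Definition same (x y : chord) : Prop := same_chord (fst x) (snd x) (fst y) (snd y).
Definition rho (x y : chord) : R :=
  Rmin (Rmax (dist (fst x) (fst y)) (dist (snd x) (snd y)))
       (Rmax (dist (fst x) (snd y)) (dist (snd x) (fst y))).
Definition on_circle_ch (x : chord) : Prop := on_circle (fst x) /\ on_circle (snd x).

Lemma rho_le_char x y r : rho x y <= r <->
  (dist (fst x) (fst y) <= r /\ dist (snd x) (snd y) <= r) \/
  (dist (fst x) (snd y) <= r /\ dist (snd x) (fst y) <= r).
Proof. unfold rho, Rmin, Rmax. repeat destruct Rle_dec; split; intros; try lra; intuition lra. Qed.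

Lemma rho_lt_char x y r : rho x y < r <->
  (dist (fst x) (fst y) < r /\ dist (snd x) (snd y) < r) \/
  (dist (fst x) (snd y) < r /\ dist (snd x) (fst y) < r).
Proof. unfold rho, Rmin, Rmax. repeat destruct Rle_dec; split; intros; try lra; intuition lra. Qed.

Lemma rho_nonneg x y : 0 <= rho x y.
Proof.
  destruct (Rle_lt_dec 0 (rho x y)) as [h|h]; auto.
  apply rho_lt_char in h. destruct h as [[A B]|[A B]];
  [assert (p := dist_nonneg (fst x) (fst y)) | assert (p := dist_nonneg (fst x) (snd y))]; lra.
Qed.

Lemma rho_sym x y : rho x y = rho y x.
Proof.
  unfold rho. rewrite (dist_sym (fst x)), (dist_sym (snd x)), (dist_sym (fst x) (snd y)),
    (dist_sym (snd x) (fst y)), (Rmax_comm (dist (snd y) (fst x))). reflexivity.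
Qed.

Lemma rho_swap_l x y : rho (swap x) y = rho x y.
Proof.
  unfold rho, swap; simpl. rewrite Rmin_comm, (Rmax_comm (dist (snd x) (snd y))),
    (Rmax_comm (dist (snd x) (fst y))). reflexivity.
Qed.

Lemma rho_refl x : rho x x = 0.
Proof. apply Rle_antisym; [|apply rho_nonneg]. apply rho_le_char. left. rewrite !dist_refl. lra. Qed.

Lemma rho_triangle x y z : rho x z <= rho x y + rho y z.
Proof.
  assert (h1 := proj1 (rho_le_char x y _) (Rle_refl _)).
  assert (h2 := proj1 (rho_le_char y z _) (Rle_refl _)).
  apply rho_le_char.
  assert (t1 := dist_triangle (fst x) (fst y) (fst z)).
  assert (t2 := dist_triangle (snd x) (snd y) (snd z)).
  assert (t3 := dist_triangle (fst x) (snd y) (snd z)).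
  assert (t4 := dist_triangle (snd x) (fst y) (fst z)).
  assert (t5 := dist_triangle (fst x) (fst y) (snd z)).
  assert (t6 := dist_triangle (snd x) (snd y) (fst z)).
  assert (t7 := dist_triangle (fst x) (snd y) (fst z)).
  assert (t8 := dist_triangle (snd x) (fst y) (snd z)).
  destruct h1 as [[a1 a2]|[a1 a2]]; destruct h2 as [[b1 b2]|[b1 b2]];
  [left|right|right|left]; split; lra.
Qed.

Lemma rho_zero_same x y : rho x y = 0 -> same x y.
Proof.
  intro h. assert (h' : rho x y <= 0) by lra. apply rho_le_char in h'.
  unfold same, same_chord. destruct h' as [[a b]|[a b]]; [left|right]; split;
  apply dist_eq0; apply Rle_antisym; auto; apply dist_nonneg.
Qed.

Lemma same_sym x y : same x y -> same y x.
Proof. unfold same, same_chord. intuition congruence. Qed.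

Lemma same_trans x y z : same x y -> same y z -> same x z.
Proof. unfold same, same_chord. intuition congruence. Qed.

Lemma same_refl x : same x x.
Proof. unfold same, same_chord. left; auto. Qed.

Lemma same_swap x : same x (swap x).
Proof. unfold same, same_chord, swap. right; auto. Qed.

Lemma same_rho x y : same x y -> rho x y = 0.
Proof.
  destruct x as [x1 x2], y as [y1 y2]. unfold same, same_chord; simpl.
  intros [[-> ->]|[-> ->]]; [apply rho_refl|].
  change (y2, y1) with (swap (y1, y2)). rewrite rho_swap_l. apply rho_refl.
Qed.

Lemma rho_pos_not_same x y : ~ same x y -> 0 < rho x y.
Proof.
  intro hn. destruct (Rle_lt_or_eq_dec _ _ (rho_nonneg x y)) as [h|h]; auto.
  exfalso. apply hn, rho_zero_same. auto.
Qed.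

Definition cvx (t : R) (a b : pt) : pt :=
  ((1 - t) * fst a + t * fst b, (1 - t) * snd a + t * snd b).

Lemma seg_sym a b z : seg a b z -> seg b a z.
Proof. intros [t [ht ->]]. exists (1 - t). split; [lra|]. apply pt_eq; simpl; ring. Qed.

Lemma seg_left a b : seg a b a.
Proof. exists 0. split; [lra|]. apply pt_eq; simpl; ring. Qed.

Lemma seg_right a b : seg a b b.
Proof. exists 1. split; [lra|]. apply pt_eq; simpl; ring. Qed.

Lemma seg_pt p z : seg p p z -> z = p.
Proof. intros [t [_ ->]]. apply pt_eq; simpl; ring. Qed.

Lemma dist_cvx t a b c e : 0 <= t <= 1 ->
  dist (cvx t a b) (cvx t c e) <= (1 - t) * dist a c + t * dist b e.
Proof.
  intro ht.
  assert (scale : forall s p q v, 0 <= s -> dist (s * fst p + fst v, s * snd p + snd v)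
                    (s * fst q + fst v, s * snd q + snd v) = s * dist p q).
  { intros s p q v hs. unfold dist.
    replace (_ + _) with ((s * s) * dist2 p q) by (unfold dist2; simpl; ring).
    rewrite sqrt_mult by (try apply dist2_nonneg; nra). rewrite sqrt_square by lra. reflexivity. }
  eapply Rle_trans. apply (dist_triangle _ (cvx t c b)).
  apply Rplus_le_compat; apply Req_le; unfold cvx.
  - rewrite <- (scale (1 - t) a c (t * fst b, t * snd b)) by lra. reflexivity.
  - rewrite <- (scale t b e ((1 - t) * fst c, (1 - t) * snd c)) by lra.
    f_equal; apply pt_eq; simpl; ring.
Qed.

Lemma norm2_cvx t c e : on_circle c -> on_circle e ->
  norm2 (cvx t c e) = 1 - t * (1 - t) * dist2 c e.
Proof.
  unfold on_circle. intros h1 h2.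
  transitivity ((1 - t) * norm2 c + t * norm2 e - t * (1 - t) * dist2 c e);
    [unfold norm2, dist2, cvx; simpl; ring|]. unfold norm2. rewrite h1, h2; ring.
Qed.

Lemma rho_hclose x y eps : rho x y < eps -> hclose eps (fst x) (snd x) (fst y) (snd y).
Proof.
  intro h. apply rho_lt_char in h.
  assert (K : forall a b c e, (dist a c < eps /\ dist b e < eps) \/ (dist a e < eps /\ dist b c < eps) ->
     forall z, seg a b z -> exists w, seg c e w /\ dist z w < eps).
  { intros a b c e H z [t [ht ->]].
    assert (avg : forall d1 d2, d1 < eps -> d2 < eps -> (1 - t) * d1 + t * d2 < eps)
      by (intros; destruct (Req_dec t 0); subst; nra).
    destruct H as [[h1 h2]|[h1 h2]].
    - exists (cvx t c e). split. exists t; split; auto.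
      eapply Rle_lt_trans. apply (dist_cvx t a b c e ht). apply avg; auto.
    - exists (cvx (1 - t) c e). split. exists (1 - t); split; [lra|reflexivity].
      replace (cvx (1 - t) c e) with (cvx t e c) by (apply pt_eq; unfold cvx; simpl; ring).
      eapply Rle_lt_trans. apply (dist_cvx t a b e c ht). apply avg; auto. }
  split.
  - apply K; exact h.
  - intros w hw. destruct (K (fst y) (snd y) (fst x) (snd x)) with w as [z [hz hd]]; auto.
    rewrite !(dist_sym (fst y)), !(dist_sym (snd y)). intuition.
    exists z. split; auto. rewrite dist_sym; auto.
Qed.

(* A point of a chord eps-close to a point of the circle is 3 sqrt(eps)-close
   to one of the endpoints: the chord must almost reach the circle there. *)
Lemma near_circle_near_endpoint a c e w eps : on_circle a -> on_circle c -> on_circle e ->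
  seg c e w -> dist a w < eps -> 0 < eps <= 1 ->
  dist a c < 3 * sqrt eps \/ dist a e < 3 * sqrt eps.
Proof.
  intros ha hc he [t [ht ->]] hd he1. fold (cvx t c e) in *.
  set (w := cvx t c e) in *.
  assert (Nw : norm2 w = 1 - t * (1 - t) * dist2 c e) by (apply norm2_cvx; auto).
  assert (T := dist_triangle a w origin).
  replace (dist a origin) with 1 in T
    by (unfold dist, origin; simpl; unfold on_circle in ha; rewrite <- sqrt_1; f_equal; lra).
  replace (dist w origin) with (sqrt (norm2 w)) in T
    by (unfold dist, norm2, origin; simpl; f_equal; ring).
  assert (S2 : (1 - eps) * (1 - eps) < norm2 w).
  { rewrite <- (sqrt_sqrt (norm2 w)) by apply norm2_nonneg.
    assert (0 <= 1 - eps) by lra. assert (0 <= sqrt (norm2 w)) by apply sqrt_pos. nra. }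
  assert (K : t * (1 - t) * dist2 c e < 2 * eps) by nra.
  assert (Dn := dist2_nonneg c e).
  assert (se := sqrt_pos eps). assert (see := sqrt_sqrt eps (Rlt_le _ _ (proj1 he1))).
  assert (ele : eps <= sqrt eps).
  { assert (sqrt eps <= 1) by (rewrite <- sqrt_1; apply sqrt_le_1_alt; lra). nra. }
  destruct (Rle_lt_dec t (1/2)).
  - left. assert (Dwc : dist2 w c = t * t * dist2 c e) by (unfold w, dist2, cvx; simpl; ring).
    assert (dist2 w c < (2 * sqrt eps) * (2 * sqrt eps)).
    { rewrite Dwc. assert (t * t * dist2 c e <= 2 * (t * (1 - t) * dist2 c e)).
      { assert (0 <= t * dist2 c e) by nra. nra. }
      nra. }
    assert (dist w c < 2 * sqrt eps) by (apply dist_lt_dist2; nra).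
    assert (X := dist_triangle a w c). lra.
  - right. assert (Dwe : dist2 w e = (1 - t) * (1 - t) * dist2 c e) by (unfold w, dist2, cvx; simpl; ring).
    assert (dist2 w e < (2 * sqrt eps) * (2 * sqrt eps)).
    { rewrite Dwe. assert ((1 - t) * (1 - t) * dist2 c e <= 2 * (t * (1 - t) * dist2 c e)).
      { assert (0 <= (1 - t) * dist2 c e) by nra. nra. }
      nra. }
    assert (dist w e < 2 * sqrt eps) by (apply dist_lt_dist2; nra).
    assert (X := dist_triangle a w e). lra.
Qed.

Lemma endpoints_close_rho x y h :
  (dist (fst x) (fst y) < h \/ dist (fst x) (snd y) < h) ->
  (dist (snd x) (fst y) < h \/ dist (snd x) (snd y) < h) ->
  (dist (fst y) (fst x) < h \/ dist (fst y) (snd x) < h) ->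
  (dist (snd y) (fst x) < h \/ dist (snd y) (snd x) < h) ->
  rho x y < 3 * h.
Proof.
  intros H1 H2 H3 H4.
  rewrite (dist_sym (fst y)), (dist_sym (fst y) (snd x)) in H3.
  rewrite (dist_sym (snd y)), (dist_sym (snd y) (snd x)) in H4.
  assert (t1 := dist_triangle3 (fst x) (snd y) (snd x) (fst y)).
  assert (t2 := dist_triangle3 (snd x) (fst y) (fst x) (snd y)).
  assert (t3 := dist_triangle3 (fst x) (fst y) (snd x) (snd y)).
  assert (t4 := dist_triangle3 (snd x) (snd y) (fst x) (fst y)).
  rewrite (dist_sym (snd y) (snd x)), (dist_sym (fst y) (fst x)) in *.
  rewrite (dist_sym (snd y) (fst x)), (dist_sym (fst y) (snd x)) in *.
  assert (p1 := dist_nonneg (fst x) (fst y)). assert (p2 := dist_nonneg (fst x) (snd y)).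
  assert (p3 := dist_nonneg (snd x) (fst y)). assert (p4 := dist_nonneg (snd x) (snd y)).
  apply rho_lt_char.
  destruct H1, H2, H3, H4; try (first [left; split; lra | right; split; lra]).
Qed.

Lemma hclose_rho_eps delta : 0 < delta -> exists eps, 0 < eps /\ forall x y,
  on_circle_ch x -> on_circle_ch y ->
  hclose eps (fst x) (snd x) (fst y) (snd y) -> rho x y < delta.
Proof.
  intro hd. set (e := Rmin 1 ((delta / 9) * (delta / 9))).
  assert (e0 : 0 < e) by (unfold e; apply Rmin_pos; [lra| apply Rmult_lt_0_compat; lra]).
  assert (e1 : e <= 1) by apply Rmin_l.
  assert (se : sqrt e <= delta / 9).
  { rewrite <- (sqrt_square (delta/9)) by lra. apply sqrt_le_1_alt. apply Rmin_r. }
  exists e. split; auto. intros x y [h1 h2] [h3 h4] [H1 H2].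
  eapply Rlt_le_trans with (3 * (3 * sqrt e)); [|lra].
  apply endpoints_close_rho.
  - destruct (H1 (fst x) (seg_left _ _)) as [w [hw d]]. eapply near_circle_near_endpoint; eauto.
  - destruct (H1 (snd x) (seg_right _ _)) as [w [hw d]]. eapply near_circle_near_endpoint; eauto.
  - destruct (H2 (fst y) (seg_left _ _)) as [w [hw d]]. rewrite dist_sym in d.
    eapply near_circle_near_endpoint; eauto.
  - destruct (H2 (snd y) (seg_right _ _)) as [w [hw d]]. rewrite dist_sym in d.
    eapply near_circle_near_endpoint; eauto.
Qed.

(** * Orientation and crossing *)

(* Twice the signed area of the triangle pqr. *)
Definition orient (p q r : pt) : R :=
  (fst q - fst p) * (snd r - snd p) - (snd q - snd p) * (fst r - fst p).

Lemma orient_cvx p q t c e : orient p q (cvx t c e) = (1 - t) * orient p q c + t * orient p q e.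
Proof. unfold orient, cvx; simpl; ring. Qed.

Lemma orient_on_chord c e t : orient c e (cvx t c e) = 0.
Proof. unfold orient, cvx; simpl; ring. Qed.

(* A line meets the circle in at most two points. *)
Lemma orient_zero_circle p q r : on_circle p -> on_circle q -> on_circle r -> p <> q ->
  orient p q r = 0 -> r = p \/ r = q.
Proof.
  destruct p as [p1 p2], q as [q1 q2], r as [r1 r2]. unfold on_circle, orient; simpl.
  intros hp hq hr hpq ho.
  set (n := (q1 - p1) * (q1 - p1) + (q2 - p2) * (q2 - p2)).
  assert (hn : n <> 0).
  { intro E. apply hpq. unfold n in E. apply sumsq0 in E. destruct E. f_equal; lra. }
  (* r = p + s (q - p), where s is the projection coefficient *)
  set (X := (r1 - p1) * (q1 - p1) + (r2 - p2) * (q2 - p2)).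
  set (s := X / n).
  assert (k1 : (r1 - p1) * n = X * (q1 - p1)).
  { transitivity (X * (q1 - p1) - (q2 - p2) * ((q1 - p1) * (r2 - p2) - (q2 - p2) * (r1 - p1)));
      [unfold X, n; ring | rewrite ho; ring]. }
  assert (k2 : (r2 - p2) * n = X * (q2 - p2)).
  { transitivity (X * (q2 - p2) + (q1 - p1) * ((q1 - p1) * (r2 - p2) - (q2 - p2) * (r1 - p1)));
      [unfold X, n; ring | rewrite ho; ring]. }
  assert (e1 : r1 = p1 + s * (q1 - p1)).
  { apply (Rmult_eq_reg_r n); [|exact hn]. unfold s. field_simplify; [|exact hn]. lra. }
  assert (e2 : r2 = p2 + s * (q2 - p2)).
  { apply (Rmult_eq_reg_r n); [|exact hn]. unfold s. field_simplify; [|exact hn]. lra. }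
  (* and the circle equation gives s (s - 1) |q - p|^2 = 0 *)
  assert (E : s * (s - 1) * n = 0).
  { transitivity ((r1 * r1 + r2 * r2 - 1) - (1 - s) * (p1 * p1 + p2 * p2 - 1)
                  - s * (q1 * q1 + q2 * q2 - 1)); [rewrite e1, e2; unfold n; ring|].
    rewrite hp, hq, hr. ring. }
  apply Rmult_integral in E. destruct E as [E|E]; [|contradiction].
  apply Rmult_integral in E. destruct E as [E|E].
  - left. rewrite E in e1, e2. f_equal; lra.
  - right. assert (s = 1) by lra. rewrite H in e1, e2. f_equal; lra.
Qed.

Lemma cvx_open a b t : on_circle a -> on_circle b -> a <> b -> 0 < t < 1 -> in_open_disk (cvx t a b).
Proof.
  intros ha hb hab ht. unfold in_open_disk. fold (norm2 (cvx t a b)). rewrite norm2_cvx by auto.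
  assert (dist2 a b <> 0) by (intro E; apply hab, dist2_eq0, E).
  assert (0 < dist2 a b) by (assert (h := dist2_nonneg a b); lra).
  assert (0 < t * (1 - t)) by nra. nra.
Qed.

Lemma not_open_circle z : on_circle z -> ~ in_open_disk z.
Proof. unfold on_circle, in_open_disk. lra. Qed.

Lemma seg_boundary a b z : on_circle a -> on_circle b -> seg a b z -> ~ in_open_disk z -> z = a \/ z = b.
Proof.
  intros ha hb [t [ht ->]] hn. destruct (classic (a = b)) as [<-|hab].
  - left. apply pt_eq; unfold cvx; simpl; ring.
  - destruct (Req_dec t 0) as [->|h0]. left; apply pt_eq; unfold cvx; simpl; ring.
    destruct (Req_dec t 1) as [->|h1]. right; apply pt_eq; unfold cvx; simpl; ring.
    exfalso; apply hn. apply cvx_open; auto. lra.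
Qed.

Lemma segs_meet p q r s :
  orient p q r * orient p q s < 0 -> orient r s p * orient r s q < 0 ->
  exists l, 0 < l < 1 /\ seg r s (cvx l p q).
Proof.
  intros h1 h2.
  set (A := orient r s p) in *. set (B := orient r s q) in *.
  set (C := orient p q r) in *. set (Dd := orient p q s) in *.
  assert (frac : forall a b, a * b < 0 -> 0 < a / (a - b) < 1).
  { intros a b hab. destruct (Rlt_dec 0 a).
    - assert (b < 0) by nra. split; [apply Rdiv_lt_0_compat; lra|].
      apply (Rmult_lt_reg_r (a - b)); [lra|]. field_simplify; lra.
    - assert (a < 0) by (destruct (Req_dec a 0); [subst; lra|lra]). assert (0 < b) by nra.
      replace (a / (a - b)) with ((- a) / (b - a)) by (field; lra). split.
      + apply Rdiv_lt_0_compat; lra.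
      + apply (Rmult_lt_reg_r (b - a)); [lra|]. field_simplify; lra. }
  assert (hAB : A - B <> 0) by nra. assert (hCD : C - Dd <> 0) by nra.
  exists (A / (A - B)). split; [apply frac; exact h2|].
  exists (C / (C - Dd)). split; [destruct (frac C Dd h1); lra|].
  unfold cvx, A, B, C, Dd, orient. apply pt_eq; simpl; field; split; auto.
Qed.

Lemma separated_chords_cross p q r s : on_circle p -> on_circle q ->
  orient p q r * orient p q s < 0 -> orient r s p * orient r s q < 0 -> cross p q r s.
Proof.
  intros hp hq h1 h2. destruct (segs_meet p q r s h1 h2) as [l [hl hseg]].
  assert (hpq : p <> q) by (intro E; subst q; unfold orient in h1; nra).
  split.
  - assert (zero_at : forall c e, orient c e c = 0 /\ orient c e e = 0)
      by (intros; unfold orient; split; ring).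
    intros [[E1 E2]|[E1 E2]]; subst r s; destruct (zero_at p q); nra.
  - exists (cvx l p q). split; [apply cvx_open; auto|]. split; auto. exists l. split; [lra|reflexivity].
Qed.

Lemma chord_through_point_separates p q c e s :
  on_circle p -> on_circle q -> on_circle c -> on_circle e -> p <> q -> c <> e ->
  ~ same_chord p q c e -> 0 < s < 1 -> orient p q (cvx s c e) = 0 ->
  orient p q c * orient p q e < 0.
Proof.
  intros hp hq hc he hpq hce hns hs ho. rewrite orient_cvx in ho.
  destruct (Req_dec (orient p q c) 0) as [Z1|Z1].
  - exfalso. assert (Z2 : orient p q e = 0) by (rewrite Z1 in ho; nra).
    destruct (orient_zero_circle p q c hp hq hc hpq Z1);
    destruct (orient_zero_circle p q e hp hq he hpq Z2); subst;
    try congruence; apply hns; [left|right]; auto.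
  - assert (0 < orient p q c * orient p q c) by (assert (h := Rle_0_sqr (orient p q c));
      unfold Rsqr in h; destruct (Rle_lt_or_eq_dec _ _ h) as [h'|h']; auto;
      exfalso; apply Z1; symmetry in h'; apply Rmult_integral in h'; tauto).
    nra.
Qed.

(** * Sequences *)

Definition incr (phi : nat -> nat) : Prop := forall n, (phi n < phi (S n))%nat.

Lemma incr_mono phi : incr phi -> forall n m, (n <= m)%nat -> (phi n <= phi m)%nat.
Proof. intros h n m hnm. induction hnm. lia. specialize (h m). lia. Qed.

Lemma incr_lt phi : incr phi -> forall i j, (i < j)%nat -> (phi i < phi j)%nat.
Proof. intros h i j hij. assert (X := incr_mono phi h (S i) j hij). specialize (h i). lia. Qed.

Lemma incr_ge phi : incr phi -> forall n, (n <= phi n)%nat.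
Proof. intros h n. induction n. lia. specialize (h n). lia. Qed.

Lemma incr_comp phi psi : incr phi -> incr psi -> incr (fun n => phi (psi n)).
Proof. intros h1 h2 n. apply incr_lt; auto. Qed.

Lemma inv_S_pos n : 0 < / INR (S n).
Proof. apply Rinv_0_lt_compat, lt_0_INR; lia. Qed.

Lemma inv_S_mono n m : (n <= m)%nat -> / INR (S m) <= / INR (S n).
Proof. intro h. apply Rinv_le_contravar. apply lt_0_INR; lia. apply le_INR; lia. Qed.

Lemma inv_S_small e : 0 < e -> exists N, forall n, (n >= N)%nat -> / INR (S n) < e.
Proof.
  intro he. destruct (archimed_cor1 e he) as [N [h1 h2]]. exists N. intros n hn.
  eapply Rle_lt_trans; [|exact h1].
  apply Rinv_le_contravar. apply lt_0_INR; lia. apply le_INR; lia.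
Qed.

Lemma cv_const c : Un_cv (fun _ => c) c.
Proof. intros e he. exists O. intros. unfold Rdist. rewrite Rminus_diag, Rabs_R0. lra. Qed.

Lemma cv_sub u l phi : incr phi -> Un_cv u l -> Un_cv (fun n => u (phi n)) l.
Proof.
  intros hp h e he. destruct (h e he) as [N HN]. exists N. intros n hn. apply HN.
  assert (H := incr_ge phi hp n). lia.
Qed.

Lemma cv_le u l c N : (forall n, (n >= N)%nat -> u n <= c) -> Un_cv u l -> l <= c.
Proof.
  intros H h. destruct (Rle_lt_dec l c); auto.
  destruct (h (l - c)) as [M HM]. lra. specialize (HM (max N M) ltac:(lia)).
  specialize (H (max N M) ltac:(lia)). unfold Rdist in HM. apply Rabs_def2 in HM. lra.
Qed.

Lemma cv_ge u l c N : (forall n, (n >= N)%nat -> c <= u n) -> Un_cv u l -> c <= l.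
Proof.
  intros H h. destruct (Rle_lt_dec c l); auto.
  destruct (h (c - l)) as [M HM]. lra. specialize (HM (max N M) ltac:(lia)).
  specialize (H (max N M) ltac:(lia)). unfold Rdist in HM. apply Rabs_def2 in HM. lra.
Qed.

Lemma cv_eq u l c N : (forall n, (n >= N)%nat -> u n = c) -> Un_cv u l -> l = c.
Proof.
  intros H h. apply Rle_antisym.
  - apply (cv_le u l c N); [intros; rewrite H; auto; lra|auto].
  - apply (cv_ge u l c N); [intros; rewrite H; auto; lra|auto].
Qed.

Lemma cv_neg u l : Un_cv u l -> l < 0 -> exists N, forall n, (n >= N)%nat -> u n < 0.
Proof.
  intros h hl. destruct (h (-l)) as [N HN]. lra. exists N. intros n hn. specialize (HN n hn).
  unfold Rdist in HN. apply Rabs_def2 in HN. lra.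
Qed.

Definition cvp (u : nat -> pt) (l : pt) : Prop :=
  Un_cv (fun n => fst (u n)) (fst l) /\ Un_cv (fun n => snd (u n)) (snd l).
Definition cvc (u : nat -> chord) (l : chord) : Prop :=
  cvp (fun n => fst (u n)) (fst l) /\ cvp (fun n => snd (u n)) (snd l).

Lemma cvp_dist u l : cvp u l <->
  forall e, 0 < e -> exists N, forall n, (n >= N)%nat -> dist (u n) l < e.
Proof.
  split.
  - intros [h1 h2] e he. destruct (h1 (e/2)) as [N1 H1]. lra. destruct (h2 (e/2)) as [N2 H2]. lra.
    exists (max N1 N2). intros n hn. specialize (H1 n ltac:(lia)). specialize (H2 n ltac:(lia)).
    unfold Rdist in *. eapply Rle_lt_trans. apply dist_le_abs. lra.
  - intro h. split; intros e he; destruct (h e he) as [N HN]; exists N; intros n hn;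
    unfold Rdist; eapply Rle_lt_trans; try apply (HN n hn).
    apply abs_fst_le. apply abs_snd_le.
Qed.

Lemma cvc_rho u l : cvc u l -> forall e, 0 < e -> exists N, forall n, (n >= N)%nat -> rho (u n) l < e.
Proof.
  intros [h1 h2] e he. destruct (proj1 (cvp_dist _ _) h1 e he) as [N1 H1].
  destruct (proj1 (cvp_dist _ _) h2 e he) as [N2 H2].
  exists (max N1 N2). intros n hn. apply rho_lt_char. left. split; [apply H1|apply H2]; lia.
Qed.

Lemma cvp_sub u l phi : incr phi -> cvp u l -> cvp (fun n => u (phi n)) l.
Proof. intros hp [h1 h2]. split; apply (cv_sub (fun n => _ (u n))); auto. Qed.

Lemma cvc_sub u l phi : incr phi -> cvc u l -> cvc (fun n => u (phi n)) l.
Proof. intros hp [h1 h2]. split; apply (cvp_sub (fun n => _ (u n))); auto. Qed.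

Lemma cvp_uniq u l1 l2 : cvp u l1 -> cvp u l2 -> l1 = l2.
Proof. intros [a b] [c e]. apply pt_eq; eapply UL_sequence; eauto. Qed.

Lemma cvp_const z : cvp (fun _ => z) z.
Proof. split; apply cv_const. Qed.

Lemma cvp_sigma d u l : cvp u l -> cvp (fun n => sigma d (u n)) (sigma d l).
Proof.
  intro h. unfold sigma. induction d; simpl; [apply cvp_const|].
  destruct h as [a b], IHd as [c e]. split; simpl.
  - apply CV_minus; apply CV_mult; auto.
  - apply CV_plus; apply CV_mult; auto.
Qed.

Lemma cv_dist2 u v a b : cvp u a -> cvp v b -> Un_cv (fun n => dist2 (u n) (v n)) (dist2 a b).
Proof. intros [a1 a2] [b1 b2]. unfold dist2. apply CV_plus; apply CV_mult; apply CV_minus; auto. Qed.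

Lemma cv_orient u v w a b c : cvp u a -> cvp v b -> cvp w c ->
  Un_cv (fun n => orient (u n) (v n) (w n)) (orient a b c).
Proof. intros [a1 a2] [b1 b2] [c1 c2]. unfold orient. apply CV_minus; apply CV_mult; apply CV_minus; auto. Qed.

Lemma on_circle_lim u l : cvp u l -> (forall n, on_circle (u n)) -> on_circle l.
Proof.
  intros [h1 h2] H. apply (cv_eq (fun n => norm2 (u n)) (norm2 l) 1 O); [intros; apply H|].
  unfold norm2. apply CV_plus; apply CV_mult; auto.
Qed.

Lemma cvc_sc d u l : cvc u l ->
  cvc (fun n => (sigma d (fst (u n)), sigma d (snd (u n)))) (sigma d (fst l), sigma d (snd l)).
Proof. intros [h1 h2]. split; apply cvp_sigma; auto. Qed.

Lemma cvc_swap u l : cvc u l -> cvc (fun n => swap (u n)) (swap l).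
Proof. intros [h1 h2]. split; auto. Qed.

Lemma rho_lim_le u l x r N : cvc u l -> (forall n, (n >= N)%nat -> rho x (u n) <= r) -> rho x l <= r.
Proof.
  intros hc H. apply Rnot_lt_le. intro hp.
  destruct (cvc_rho u l hc (rho x l - r)) as [M HM]. lra.
  specialize (HM (max N M) ltac:(lia)). specialize (H (max N M) ltac:(lia)).
  assert (t := rho_triangle x (u (max N M)) l). lra.
Qed.

Lemma rho_lim_zero u l x : cvc u l -> (forall n, rho x (u n) < / INR (S n)) -> same x l.
Proof.
  intros hc H. apply rho_zero_same, Rle_antisym; [|apply rho_nonneg].
  apply Rnot_lt_le. intro hp.
  destruct (inv_S_small (rho x l / 2)) as [N HN]. lra.
  assert (rho x l <= rho x l / 2); [|lra].
  apply (rho_lim_le u l x _ N hc). intros n hn. left. eapply Rlt_trans; [apply H|apply HN; lia].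
Qed.

Lemma same_lim u v l m : cvc u l -> cvc v m -> (forall n, same (u n) (v n)) -> same l m.
Proof.
  intros [u1 u2] [v1 v2] H.
  set (Q := fun (a b c e : pt) => (dist2 a c + dist2 b e) * (dist2 a e + dist2 b c)).
  assert (Z : Q (fst l) (snd l) (fst m) (snd m) = 0).
  { apply (cv_eq (fun n => Q (fst (u n)) (snd (u n)) (fst (v n)) (snd (v n))) _ 0 O).
    - intros n _. unfold Q. destruct (H n) as [[e1 e2]|[e1 e2]]; rewrite e1, e2; unfold dist2; ring.
    - unfold Q. apply CV_mult; apply CV_plus; apply cv_dist2; auto. }
  unfold Q in Z. apply Rmult_integral in Z.
  assert (n1 := dist2_nonneg (fst l) (fst m)). assert (n2 := dist2_nonneg (snd l) (snd m)).
  assert (n3 := dist2_nonneg (fst l) (snd m)). assert (n4 := dist2_nonneg (snd l) (fst m)).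
  unfold same, same_chord. destruct Z as [Z|Z]; [left|right]; split; apply dist2_eq0; lra.
Qed.

Lemma extract_real (u : nat -> R) : (forall n, -1 <= u n <= 1) ->
  exists phi, incr phi /\ exists l, Un_cv (fun n => u (phi n)) l.
Proof.
  intro hb. destruct (Bolzano_Weierstrass u _ (compact_P3 (-1) 1) hb) as [l hl].
  assert (G : forall N k, exists p, (N <= p)%nat /\ Rabs (u p - l) < / INR (S k)).
  { intros N k.
    destruct (hl (disc l (mkposreal _ (inv_S_pos k))) N) as [p [hp hv]].
    - exists (mkposreal _ (inv_S_pos k)). intros y hy; exact hy.
    - exists p. split; auto. }
  destruct (choice (fun (Nk : nat * nat) p => (fst Nk <= p)%nat /\ Rabs (u p - l) < / INR (S (snd Nk))))
    as [g gs]; [intros [N k]; apply G|].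
  (* phi (n+1) is an index beyond phi n where u is 1/(n+2)-close to l *)
  set (phi := fix f n := match n with O => g (O, O) | S m => g (S (f m), S m) end).
  exists phi. split.
  - intro n. simpl. destruct (gs (S (phi n), S n)). simpl in *. lia.
  - exists l. intros e he. destruct (inv_S_small e he) as [N hN].
    exists N. intros n hn. unfold Rdist.
    assert (Rabs (u (phi n) - l) < / INR (S n)) by (destruct n; simpl; apply gs).
    eapply Rlt_trans; [apply H | apply hN; lia].
Qed.

Lemma extract_pt (u : nat -> pt) : (forall n, on_circle (u n)) ->
  exists phi, incr phi /\ exists l, cvp (fun n => u (phi n)) l.
Proof.
  intro hc.
  assert (hb : forall n, -1 <= fst (u n) <= 1 /\ -1 <= snd (u n) <= 1).
  { intro n. assert (h := hc n). unfold on_circle in h.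
    assert (h1 := Rle_0_sqr (fst (u n))). assert (h2 := Rle_0_sqr (snd (u n))).
    unfold Rsqr in *. split; split; nra. }
  destruct (extract_real (fun n => fst (u n))) as [p1 [hp1 [l1 h1]]]; [apply hb|].
  destruct (extract_real (fun n => snd (u (p1 n)))) as [p2 [hp2 [l2 h2]]]; [intro; apply hb|].
  exists (fun n => p1 (p2 n)). split. apply incr_comp; auto.
  exists (l1, l2). split; simpl; auto. apply (cv_sub (fun n => fst (u (p1 n)))); auto.
Qed.

Lemma extract_ch (u : nat -> chord) : (forall n, on_circle_ch (u n)) ->
  exists phi, incr phi /\ exists l, cvc (fun n => u (phi n)) l.
Proof.
  intro hb. destruct (extract_pt (fun n => fst (u n))) as [p1 [hp1 [l1 h1]]]. intro; apply hb.
  destruct (extract_pt (fun n => snd (u (p1 n)))) as [p2 [hp2 [l2 h2]]]. intro; apply hb.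
  exists (fun n => p1 (p2 n)). split. apply incr_comp; auto.
  exists (l1, l2). split; simpl; auto. apply (cvp_sub (fun n => fst (u (p1 n)))); auto.
Qed.

Lemma extract_family (g : nat -> nat -> chord) m : (forall n i, (i < m)%nat -> on_circle_ch (g n i)) ->
  exists phi, incr phi /\ exists h, forall i, (i < m)%nat -> cvc (fun n => g (phi n) i) (h i).
Proof.
  revert g. induction m; intros g hb.
  - exists (fun n => n). split. intro; lia. exists (fun _ => (origin, origin)). intros; lia.
  - destruct (IHm g) as [p1 [hp1 [h1 H1]]]. intros; apply hb; lia.
    destruct (extract_ch (fun n => g (p1 n) m)) as [p2 [hp2 [l2 H2]]]. intro; apply hb; lia.
    exists (fun n => p1 (p2 n)). split. apply incr_comp; auto.
    exists (fun i => if Nat.eqb i m then l2 else h1 i). intros i hi.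
    destruct (Nat.eqb_spec i m).
    + subst. exact H2.
    + apply (cvc_sub (fun n => g (p1 n) i)); auto. apply H1. lia.
Qed.

(** * Limits of leaves *)

Definition leaf (L : pt -> pt -> Prop) (x : chord) : Prop := L (fst x) (snd x).

Lemma leaf_on_circle L x : lamination L -> leaf L x -> on_circle_ch x.
Proof. intros [_ [h _]] hx. apply h, hx. Qed.

Lemma leaf_swap L x : lamination L -> leaf L x -> leaf L (swap x).
Proof. intros hL h. apply (proj1 hL), h. Qed.

Lemma open_point_of_chord c e s : on_circle c -> on_circle e -> 0 <= s <= 1 ->
  in_open_disk (cvx s c e) -> c <> e /\ 0 < s < 1.
Proof.
  intros hc he hs ho.
  assert (hpt : forall p, on_circle p -> cvx s c e <> p)
    by (intros p hp E; rewrite E in ho; exact (not_open_circle p hp ho)).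
  split; [|split].
  - intro E. subst e. apply (hpt c hc). apply pt_eq; unfold cvx; simpl; ring.
  - destruct (Req_dec s 0) as [->|]; [|lra]. exfalso. apply (hpt c hc). apply pt_eq; unfold cvx; simpl; ring.
  - destruct (Req_dec s 1) as [->|]; [|lra]. exfalso. apply (hpt e he). apply pt_eq; unfold cvx; simpl; ring.
Qed.

(* The midpoint m of the
   limit chord ab lies on some leaf ce (the union of leaves is closed); if ce
   were not ab, the chords ab and ce would strictly separate each other, and
   so would the leaves u n and ce for n large, which then cross. *)
Lemma leaf_lim L u l : lamination L -> (forall n, leaf L (u n)) -> cvc u l -> leaf L l.
Proof.
  intros hL hu [ha hb]. destruct hL as [Lsym [Lcirc [Lpt [Lnc Lcl]]]].
  unfold leaf in *. set (a := fst l) in *. set (b := snd l) in *.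
  assert (ca : on_circle a) by (apply (on_circle_lim _ _ ha); intro n; apply (Lcirc _ _ (hu n))).
  assert (cb : on_circle b) by (apply (on_circle_lim _ _ hb); intro n; apply (Lcirc _ _ (hu n))).
  destruct (classic (a = b)) as [<-|hab]; [apply Lpt; auto|].
  set (m := cvx (/2) a b).
  assert (mu : lam_union L m).
  { apply Lcl. intros eps he. destruct (proj1 (cvp_dist _ _) ha eps he) as [N1 H1].
    destruct (proj1 (cvp_dist _ _) hb eps he) as [N2 H2]. set (n := max N1 N2).
    exists (cvx (/2) (fst (u n)) (snd (u n))). split.
    - exists (fst (u n)), (snd (u n)). split; auto. exists (/2). split; [lra|reflexivity].
    - rewrite dist_sym. eapply Rle_lt_trans. apply dist_cvx. lra.
      specialize (H1 n ltac:(lia)). specialize (H2 n ltac:(lia)). lra. }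
  destruct mu as [c [e [Lce [s [hs hm]]]]]. fold (cvx s c e) in hm.
  destruct (Lcirc _ _ Lce) as [cc ce].
  destruct (classic (same_chord a b c e)) as [[[-> ->]|[-> ->]]|hns]; auto.
  exfalso.
  assert (mo : in_open_disk m) by (apply cvx_open; auto; lra).
  destruct (open_point_of_chord c e s cc ce hs ltac:(rewrite <- hm; exact mo)) as [hce hs'].
  assert (P1 : orient a b c * orient a b e < 0).
  { apply (chord_through_point_separates a b c e s); auto. rewrite <- hm. apply orient_on_chord. }
  assert (P2 : orient c e a * orient c e b < 0).
  { apply (chord_through_point_separates c e a b (/2)); auto; [|lra|].
    - intro E. apply hns. destruct E as [[-> ->]|[-> ->]]; [left|right]; auto.
    - fold m. rewrite hm. apply orient_on_chord. }
  assert (C1 := CV_mult _ _ _ _ (cv_orient _ _ _ _ _ _ ha hb (cvp_const c))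
                                (cv_orient _ _ _ _ _ _ ha hb (cvp_const e))).
  assert (C2 := CV_mult _ _ _ _ (cv_orient _ _ _ _ _ _ (cvp_const c) (cvp_const e) ha)
                                (cv_orient _ _ _ _ _ _ (cvp_const c) (cvp_const e) hb)).
  destruct (cv_neg _ _ C1 P1) as [N1 H1]. destruct (cv_neg _ _ C2 P2) as [N2 H2].
  set (n := max N1 N2). specialize (H1 n ltac:(lia)). specialize (H2 n ltac:(lia)).
  destruct (Lcirc _ _ (hu n)) as [c1 c2].
  apply (Lnc _ _ _ _ (hu n) Lce). apply separated_chords_cross; auto.
Qed.

(** * Sibling families and their limits *)

Definition sigma_ch (d : nat) (x : chord) : chord := (sigma d (fst x), sigma d (snd x)).

Definition sibling_family (d : nat) (L : pt -> pt -> Prop) (f : nat -> chord) : Prop :=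
  (forall i, (i < d)%nat -> leaf L (f i)) /\
  (forall i j, (i < d)%nat -> (j < d)%nat -> i <> j -> disjoint_chords (f i) (f j)) /\
  (forall i, (i < d)%nat -> same (sigma_ch d (f i)) (sigma_ch d (f O))).

Lemma same_sigma_ch d y y' : same y y' -> same (sigma_ch d y) (sigma_ch d y').
Proof. destruct y, y'. unfold same, same_chord, sigma_ch. simpl. intros [[-> ->]|[-> ->]]; auto. Qed.

Lemma disjoint_sym x y : disjoint_chords x y -> disjoint_chords y x.
Proof. intros h [z [h1 h2]]. apply h. exists z. auto. Qed.

Lemma disjoint_swap x y : disjoint_chords x y -> disjoint_chords (swap x) y.
Proof. intros h [z [h1 h2]]. apply h. exists z. split; auto. apply seg_sym, h1. Qed.

Lemma disjoint_same x x' y : same x x' -> disjoint_chords x' y -> disjoint_chords x y.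
Proof.
  destruct x as [p q], x' as [p' q']. unfold same, same_chord; simpl.
  intros [[-> ->]|[-> ->]] h; auto. exact (disjoint_swap (p', q') y h).
Qed.

Lemma meeting_leaves_share_endpoint L x y : lamination L -> leaf L x -> leaf L y ->
  ~ disjoint_chords x y -> fst x = fst y \/ fst x = snd y \/ snd x = fst y \/ snd x = snd y.
Proof.
  intros hL hx hy hnd. apply NNPP in hnd. destruct hnd as [z [zx zy]].
  destruct (leaf_on_circle L x hL hx) as [cx1 cx2]. destruct (leaf_on_circle L y hL hy) as [cy1 cy2].
  destruct (classic (in_open_disk z)) as [ho|ho].
  - destruct (classic (same x y)) as [hs|hs]; [unfold same, same_chord in hs; tauto|].
    exfalso. destruct hL as [_ [_ [_ [hnc _]]]]. apply (hnc _ _ _ _ hx hy). split; [exact hs|].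
    exists z. auto.
  - destruct (seg_boundary _ _ z cx1 cx2 zx ho) as [e1|e1];
    destruct (seg_boundary _ _ z cy1 cy2 zy ho) as [e2|e2]; rewrite <- e1, <- e2; tauto.
Qed.

(* Disjoint leaves u n, v n with the same image converging to chords cx and
   cy with a common first endpoint c: for n large the first endpoints are
   within 1/d, so by local injectivity of sigma_d the images match crosswise,
   and in the limit sigma_d x = sigma_d c. *)
Lemma sibling_limits_common_endpoint d L u v c x y : (1 <= d)%nat -> lamination L ->
  (forall n, leaf L (u n) /\ leaf L (v n)) -> (forall n, disjoint_chords (u n) (v n)) ->
  (forall n, same (sigma_ch d (u n)) (sigma_ch d (v n))) -> cvc u (c, x) -> cvc v (c, y) ->
  sigma d x = sigma d c.
Proof.
  intros hd hL hl hdis hs hu hv.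
  assert (r : 0 < / INR d) by (apply Rinv_0_lt_compat, lt_0_INR; lia).
  destruct (proj1 (cvp_dist _ _) (proj1 hu) (/ INR d / 2)) as [N1 H1]. lra.
  destruct (proj1 (cvp_dist _ _) (proj1 hv) (/ INR d / 2)) as [N2 H2]. lra.
  assert (K : forall n, (n >= max N1 N2)%nat -> sigma d (snd (u n)) = sigma d (fst (v n))).
  { intros n hn. specialize (H1 n ltac:(lia)). specialize (H2 n ltac:(lia)). simpl in H1, H2.
    destruct (leaf_on_circle L _ hL (proj1 (hl n))) as [a1 a2].
    destruct (leaf_on_circle L _ hL (proj2 (hl n))) as [b1 b2].
    destruct (hs n) as [[e1 e2]|[e1 e2]]; simpl in e1, e2; [exfalso|exact e2].
    assert (E : fst (u n) = fst (v n)).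
    { apply (sigma_locally_injective d); auto. assert (t := dist_triangle (fst (u n)) c (fst (v n))).
      rewrite (dist_sym c) in t. unfold Rdiv. lra. }
    apply (hdis n). exists (fst (u n)). split. apply seg_left. rewrite E. apply seg_left. }
  assert (cx := cvp_sigma d _ _ (proj2 hu)). assert (cc := cvp_sigma d _ _ (proj1 hv)).
  apply (cvp_uniq (fun n => sigma d (snd (u (n + max N1 N2)%nat)))).
  - split; apply (cv_sub (fun n => _ (sigma d (snd (u n)))) _ (fun n => (n + max N1 N2)%nat));
      try (intro; lia); apply cx.
  - apply (cvp_dist _ _). intros e he. destruct (proj1 (cvp_dist _ _) cc e he) as [N HN].
    exists N. intros n hn. rewrite K by lia. apply HN. lia.
Qed.

Lemma sibling_limits_no_common_endpoint d L u v x y : (1 <= d)%nat -> lamination L ->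
  (forall n, leaf L (u n) /\ leaf L (v n)) -> (forall n, disjoint_chords (u n) (v n)) ->
  (forall n, same (sigma_ch d (u n)) (sigma_ch d (v n))) -> cvc u x -> cvc v y ->
  sigma d (fst x) <> sigma d (snd x) ->
  ~ (fst x = fst y \/ fst x = snd y \/ snd x = fst y \/ snd x = snd y).
Proof.
  intros hd hL hl hdis hs hu hv hnc.
  (* each of the four configurations reduces to the first one by reversing chords *)
  set (fl := fun (b : bool) z => if b then swap z else z).
  assert (R : forall b z, same (fl b z) z) by (intros [|] z; [apply same_sym, same_swap|apply same_refl]).
  assert (Rev : forall b1 b2, fst (fl b1 x) = fst (fl b2 y) ->
                  sigma d (snd (fl b1 x)) = sigma d (fst (fl b1 x))).
  { intros b1 b2 E.
    assert (C : forall b w l, cvc w l -> cvc (fun n => fl b (w n)) (fl b l))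
      by (intros [|] w l h; [apply cvc_swap|]; exact h).
    destruct (fl b1 x) as [c x'] eqn:Ex1, (fl b2 y) as [c' y'] eqn:Ey1. simpl in E |- *. subst c'.
    apply (sibling_limits_common_endpoint d L (fun n => fl b1 (u n)) (fun n => fl b2 (v n)) c x' y');
      auto.
    - intro n. destruct (hl n). split; [destruct b1|destruct b2]; simpl; auto; apply leaf_swap; auto.
    - intro n. apply (disjoint_same _ (u n)); [apply R|]. apply disjoint_sym.
      apply (disjoint_same _ (v n)); [apply R|]. apply disjoint_sym, hdis.
    - intro n. apply (same_trans _ (sigma_ch d (u n))); [apply same_sigma_ch, R|].
      apply (same_trans _ (sigma_ch d (v n))); [apply hs|apply same_sigma_ch, same_sym, R].
    - rewrite <- Ex1. apply C, hu.
    - rewrite <- Ey1. apply C, hv. }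
  intros H. apply hnc.
  destruct H as [E|[E|[E|E]]];
    [apply (Rev false false) in E|apply (Rev false true) in E|apply (Rev true false) in E
    |apply (Rev true true) in E]; simpl in E; auto.
Qed.

(* A limit of sibling families is a sibling family, provided the limit of the
   first leaves has non-degenerate image: the limit leaves are leaves, have a
   common image, and cannot meet (they would share an endpoint). *)
Lemma sibling_family_limit d L (g : nat -> nat -> chord) h : (1 <= d)%nat -> lamination L ->
  (forall n, sibling_family d L (g n)) -> (forall i, (i < d)%nat -> cvc (fun n => g n i) (h i)) ->
  sigma d (fst (h O)) <> sigma d (snd (h O)) -> sibling_family d L h.
Proof.
  intros hd hL hg hc hne.
  assert (hl : forall i, (i < d)%nat -> leaf L (h i)).
  { intros i hi. apply (leaf_lim L (fun n => g n i)); auto. intro n. apply (proj1 (hg n)), hi. }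
  assert (hs : forall i, (i < d)%nat -> same (sigma_ch d (h i)) (sigma_ch d (h O))).
  { intros i hi. apply (same_lim (fun n => sigma_ch d (g n i)) (fun n => sigma_ch d (g n O))).
    apply cvc_sc, hc, hi. apply cvc_sc, hc. lia. intro n. apply (proj2 (proj2 (hg n))), hi. }
  split; [exact hl|]. split; [|exact hs].
  intros i j hi hj hij hnd.
  apply (sibling_limits_no_common_endpoint d L (fun n => g n i) (fun n => g n j) (h i) (h j) hd hL).
  - intro n. split; apply (proj1 (hg n)); auto.
  - intro n. apply (proj1 (proj2 (hg n))); auto.
  - intro n. eapply same_trans. apply (proj2 (proj2 (hg n))), hi.
    apply same_sym, (proj2 (proj2 (hg n))), hj.
  - apply hc, hi.
  - apply hc, hj.
  - intro E. apply hne. destruct (hs i hi) as [[e1 e2]|[e1 e2]]; simpl in e1, e2; congruence.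
  - apply (meeting_leaves_share_endpoint L); auto.
Qed.

(** * Countable and finite families of chords *)

Definition countable_fam (S : chord -> Prop) : Prop :=
  exists en : nat -> chord, forall x, S x -> exists n, same x (en n).
Definition finite_fam (S : chord -> Prop) : Prop :=
  exists k (en : nat -> chord), forall x, S x -> exists n, (n < k)%nat /\ same x (en n).

Lemma countable_chords_fam (R : pt -> pt -> Prop) :
  countable_chords R <-> countable_fam (fun x => R (fst x) (snd x)).
Proof.
  split; intros [en H]; exists en.
  - intros x hx. apply H, hx.
  - intros a b h. apply (H (a, b)), h.
Qed.

Lemma countable_mono (S T : chord -> Prop) : countable_fam T ->
  (forall x, S x -> exists y, T y /\ same x y) -> countable_fam S.
Proof.
  intros [en H] h. exists en. intros x hx. destruct (h x hx) as [y [hy s]].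
  destruct (H y hy) as [n hn]. exists n. eapply same_trans; eauto.
Qed.

Lemma countable_sub (S T : chord -> Prop) : countable_fam T -> (forall x, S x -> T x) -> countable_fam S.
Proof. intros h1 h2. apply (countable_mono S T h1). intros x hx. exists x. split; auto. apply same_refl. Qed.

Lemma finite_mono (S T : chord -> Prop) : finite_fam T ->
  (forall x, S x -> exists y, T y /\ same x y) -> finite_fam S.
Proof.
  intros [k [en H]] h. exists k, en. intros x hx. destruct (h x hx) as [y [hy s]].
  destruct (H y hy) as [n hn]. exists n. split; [apply hn|]. eapply same_trans; eauto. apply hn.
Qed.

Lemma finite_countable S : finite_fam S -> countable_fam S.
Proof. intros [k [en H]]. exists en. intros x hx. destruct (H x hx) as [n [_ h]]. eauto. Qed.

Lemma countable_union (S : nat -> chord -> Prop) : (forall k, countable_fam (S k)) ->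
  countable_fam (fun x => exists k, S k x).
Proof.
  intro h. destruct (choice (fun k en => forall x, S k x -> exists n, same x (en n)) h) as [E HE].
  exists (fun m => E (fst (of_nat m)) (snd (of_nat m))).
  intros x [k hk]. destruct (HE k x hk) as [n hn]. exists (to_nat (k, n)).
  rewrite cancel_of_to. simpl. exact hn.
Qed.

Definition fibers_le2 (F : chord -> chord) (S : chord -> Prop) : Prop :=
  forall y, exists x1 x2, forall x, S x -> same (F x) y -> same x x1 \/ same x x2.

(* Pulling back a family along a map with fibres of size two; the
   enumeration of S interleaves the two fibre representatives of each
   element of the enumeration of T. *)
Lemma fibers_pullback F S (en : nat -> chord) : fibers_le2 F S ->
  exists en', forall x n, S x -> same (F x) (en n) ->
    same x (en' (2 * n)%nat) \/ same x (en' (2 * n + 1)%nat).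
Proof.
  intros hf.
  destruct (choice (fun y p => forall x, S x -> same (F x) y -> same x (fst p) \/ same x (snd p))) as [c hc].
  { intro y. destruct (hf y) as [x1 [x2 h]]. exists (x1, x2). exact h. }
  exists (fun m => if Nat.even m then fst (c (en (Nat.div2 m))) else snd (c (en (Nat.div2 m)))).
  intros x n hx hn.
  rewrite Nat.even_even, Nat.even_odd, Nat.div2_double, Nat.add_1_r, Nat.div2_succ_double.
  apply hc; auto.
Qed.

Lemma countable_fibers F S T : countable_fam T -> (forall x, S x -> T (F x)) -> fibers_le2 F S ->
  countable_fam S.
Proof.
  intros [en H] hST hf. destruct (fibers_pullback F S en hf) as [en' H'].
  exists en'. intros x hx. destruct (H (F x) (hST x hx)) as [n hn].
  destruct (H' x n hx hn); eauto.
Qed.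

Lemma finite_fibers F S T : finite_fam T -> (forall x, S x -> T (F x)) -> fibers_le2 F S ->
  finite_fam S.
Proof.
  intros [k [en H]] hST hf. destruct (fibers_pullback F S en hf) as [en' H'].
  exists (2 * k)%nat, en'. intros x hx. destruct (H (F x) (hST x hx)) as [n [hk hn]].
  destruct (H' x n hx hn); [exists (2 * n)%nat|exists (2 * n + 1)%nat]; split; auto; lia.
Qed.

Lemma pigeonhole : forall k (g : nat -> nat), (forall i, (i <= k)%nat -> (g i < k)%nat) ->
  exists i j, (i < j <= k)%nat /\ g i = g j.
Proof.
  induction k; intros g h.
  - specialize (h O (le_n 0)). lia.
  - destruct (classic (exists i, (i < S k)%nat /\ g i = g (S k))) as [[i [hi e]]|hn].
    + exists i, (S k). split; [lia|exact e].
    + (* redirect the value k to g (S k), which is not taken below S k *)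
      set (g' := fun i => if Nat.eqb (g i) k then g (S k) else g i).
      destruct (IHk g') as [i [j [hij e]]].
      * intros i hi. unfold g'. destruct (Nat.eqb_spec (g i) k).
        -- assert (g (S k) <> k) by (intro E; apply hn; exists i; split; [lia|congruence]).
           specialize (h (S k) (le_n _)). lia.
        -- specialize (h i ltac:(lia)). lia.
      * exists i, j. split; [lia|]. unfold g' in e.
        destruct (Nat.eqb_spec (g i) k), (Nat.eqb_spec (g j) k); try congruence.
        -- exfalso. apply hn. exists j. split; [lia|congruence].
        -- exfalso. apply hn. exists i. split; [lia|congruence].
Qed.

Lemma distinct_seq_not_finite S (f : nat -> chord) : (forall i j, (i < j)%nat -> ~ same (f i) (f j)) ->
  (forall i, S (f i)) -> ~ finite_fam S.
Proof.
  intros hd hS [k [en H]].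
  destruct (choice (fun i n => (n < k)%nat /\ same (f i) (en n))) as [g hg].
  { intro i. destruct (H (f i) (hS i)) as [n hn]. exists n. exact hn. }
  destruct (pigeonhole k g) as [i [j [hij e]]]. intros i _; apply hg.
  apply (hd i j ltac:(lia)). destruct (hg i) as [_ h1]. destruct (hg j) as [_ h2].
  rewrite e in h1. eapply same_trans; eauto. apply same_sym; auto.
Qed.

Lemma not_finite_avoid S : ~ finite_fam S -> forall k (en : nat -> chord),
  exists x, S x /\ forall n, (n < k)%nat -> ~ same x (en n).
Proof.
  intros h k en. apply NNPP. intro hn. apply h. exists k, en. intros x hx.
  apply NNPP. intro h2. apply hn. exists x. split; auto. intros n hk hs. apply h2. eauto.
Qed.

Lemma choose_seq (P : nat -> (nat -> chord) -> chord -> Prop) :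
  (forall n f f' x, (forall i, (i < n)%nat -> f i = f' i) -> P n f x -> P n f' x) ->
  (forall n f, exists x, P n f x) -> exists g : nat -> chord, forall n, P n g (g n).
Proof.
  intros hloc hex. destruct (choice (fun (p : nat * (nat -> chord)) x => P (fst p) (snd p) x)) as [c hc].
  { intros [n f]. apply hex. }
  (* h n lists the first n choices *)
  set (h := fix h n := match n with
                     | O => fun _ : nat => (origin, origin)
                     | S m => fun i => if Nat.ltb i m then h m i else c (m, h m) end).
  assert (H1 : forall n i, (i < n)%nat -> h (S n) i = h n i).
  { intros n i hi. simpl. destruct (Nat.ltb_spec i n); [reflexivity|lia]. }
  assert (H2 : forall n m i, (i < n)%nat -> (n <= m)%nat -> h m i = h n i).
  { intros n m i hi hm. induction hm. reflexivity. rewrite H1 by lia. exact IHhm. }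
  exists (fun i => h (S i) i). intro n.
  assert (E : (fun i => h (S i) i) n = c (n, h n)).
  { simpl. destruct (Nat.ltb_spec n n); [lia|reflexivity]. }
  rewrite E. apply (hloc n (h n)). intros i hi. cbv beta. apply (H2 (S i) n i); lia.
  apply (hc (n, h n)).
Qed.

(** The
    neighbourhoods of radius 3/(m+1) around chords with rational endpoints of
    denominator m+1 form a countable cover. *)

Definition int_of_nat (n : nat) : Z := (Z.of_nat (fst (of_nat n)) - Z.of_nat (snd (of_nat n)))%Z.

Lemma int_of_nat_surj z : exists n, int_of_nat n = z.
Proof. exists (to_nat (Z.to_nat z, Z.to_nat (- z))). unfold int_of_nat. rewrite cancel_of_to. simpl. lia. Qed.

Definition grid_pt (z1 z2 : Z) (m : nat) : pt := (IZR z1 / INR (S m), IZR z2 / INR (S m)).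

Definition grid_chord (n : nat) : chord * nat :=
  let (a, r1) := of_nat n in let (b, r2) := of_nat r1 in let (c, r3) := of_nat r2 in
  let (e, m) := of_nat r3 in
  ((grid_pt (int_of_nat a) (int_of_nat b) m, grid_pt (int_of_nat c) (int_of_nat e) m), m).

Lemma grid_chord_surj z1 z2 z3 z4 m : exists n, grid_chord n = ((grid_pt z1 z2 m, grid_pt z3 z4 m), m).
Proof.
  destruct (int_of_nat_surj z1) as [a ha]. destruct (int_of_nat_surj z2) as [b hb].
  destruct (int_of_nat_surj z3) as [c hc]. destruct (int_of_nat_surj z4) as [e he].
  exists (to_nat (a, to_nat (b, to_nat (c, to_nat (e, m))))). unfold grid_chord.
  rewrite !cancel_of_to. subst. reflexivity.
Qed.

Lemma grid_approx p m : exists z1 z2, dist p (grid_pt z1 z2 m) <= 2 / INR (S m).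
Proof.
  assert (hM : 0 < INR (S m)) by (apply lt_0_INR; lia).
  assert (approx : forall t, exists z, Rabs (t - IZR z / INR (S m)) <= / INR (S m)).
  { intro t. destruct (archimed (t * INR (S m))) as [h1 h2]. exists (up (t * INR (S m))).
    set (z := IZR (up (t * INR (S m)))) in *. set (M := INR (S m)) in *.
    replace (t - z / M) with ((t * M - z) * / M) by (field; lra).
    assert (0 < / M) by (apply Rinv_0_lt_compat; lra). apply Rabs_le. split; nra. }
  destruct (approx (fst p)) as [z1 h1]. destruct (approx (snd p)) as [z2 h2].
  exists z1, z2. eapply Rle_trans. apply dist_le_abs. unfold grid_pt; cbn [fst snd]. unfold Rdiv in *. lra.
Qed.

Lemma locally_countable_countable A :
  (forall x, A x -> exists delta, 0 < delta /\ countable_fam (fun y => A y /\ rho x y < delta)) ->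
  countable_fam A.
Proof.
  intro H.
  set (ball := fun n y => A y /\ rho (fst (grid_chord n)) y < 3 / INR (S (snd (grid_chord n)))).
  apply (countable_sub A (fun y => exists n, countable_fam (ball n) /\ ball n y)).
  - apply countable_union. intro n. destruct (classic (countable_fam (ball n))) as [h|h].
    + apply (countable_sub _ _ h). intros y [_ hy]. exact hy.
    + exists (fun _ => (origin, origin)). intros y [hy _]. contradiction.
  - intros x hx. destruct (H x hx) as [delta [hd hc]].
    destruct (inv_S_small (delta / 6)) as [m hm]; [lra|]. specialize (hm m (le_n m)).
    destruct (grid_approx (fst x) m) as [z1 [z2 e1]]. destruct (grid_approx (snd x) m) as [z3 [z4 e2]].
    destruct (grid_chord_surj z1 z2 z3 z4 m) as [n hn].
    assert (hg : rho (grid_pt z1 z2 m, grid_pt z3 z4 m) x <= 2 / INR (S m)).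
    { apply rho_le_char. left. simpl. rewrite !(dist_sym (grid_pt _ _ m)). split; auto. }
    assert (hpos := inv_S_pos m).
    exists n. unfold ball. rewrite hn. simpl fst. simpl snd. unfold Rdiv in *.
    split; [|split; auto; lra].
    apply (countable_sub _ _ hc). intros y [hy hr]. split; auto.
    eapply Rle_lt_trans. apply (rho_triangle x (grid_pt z1 z2 m, grid_pt z3 z4 m) y).
    rewrite rho_sym. lra.
Qed.

(* Nested trisection avoiding en 0, en 1, ...: no sequence exhausts [x, y]. *)
Lemma interval_not_enumerable (en : nat -> R) x y : x < y -> exists t, x <= t <= y /\ forall n, t <> en n.
Proof.
  intro hxy.
  set (step := fun (p : R * R) (v : R) => let w := (snd p - fst p) / 3 in
     if Rle_dec v (fst p + w) then (snd p - w, snd p) else (fst p, fst p + w)).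
  set (iv := fix iv n := match n with O => (x, y) | S k => step (iv k) (en k) end).
  assert (TS : forall p v, fst p < snd p -> fst (step p v) < snd (step p v) /\
     fst p <= fst (step p v) /\ snd (step p v) <= snd p /\
     (v < fst (step p v) \/ snd (step p v) < v)).
  { intros p v hp. unfold step. destruct Rle_dec; simpl; lra. }
  assert (P0 : forall n, fst (iv n) < snd (iv n)).
  { induction n. simpl; lra. apply (TS (iv n) (en n) IHn). }
  assert (P : forall n, fst (iv n) <= fst (iv (S n)) /\ snd (iv (S n)) <= snd (iv n)
     /\ (en n < fst (iv (S n)) \/ snd (iv (S n)) < en n)) by (intro n; apply (TS (iv n) (en n) (P0 n))).
  assert (Mn : forall n k, (n <= k)%nat -> fst (iv n) <= fst (iv k) /\ snd (iv k) <= snd (iv n)).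
  { intros n k hk. induction hk. lra. destruct (P m) as [b [c _]]. lra. }
  assert (LR : forall n k, fst (iv n) <= snd (iv k)).
  { intros n k. destruct (Mn n (max n k) ltac:(lia)). destruct (Mn k (max n k) ltac:(lia)).
    assert (h := P0 (max n k)). lra. }
  destruct (growing_cv (fun n => fst (iv n))) as [t ht].
  - intro n. apply (P n).
  - exists y. intros r [i ->]. exact (LR i O).
  - exists t. assert (A : forall n, fst (iv n) <= t /\ t <= snd (iv n)).
    { intro n. split.
      - apply (cv_ge (fun n => fst (iv n)) t _ n); auto. intros k hk. apply Mn; lia.
      - apply (cv_le (fun n => fst (iv n)) t _ O); auto. }
    split. destruct (A O) as [a1 a2]. simpl in a1, a2. lra.
    intros n E. destruct (A (S n)). destruct (P n) as [_ [_ h]]. lra.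
Qed.

Definition circle_param (s : R) : pt := ((1 - s * s) / (1 + s * s), 2 * s / (1 + s * s)).

Lemma circle_param_on_circle s : on_circle (circle_param s).
Proof. unfold on_circle, circle_param; simpl. assert (0 < 1 + s * s) by nra. field. lra. Qed.

Lemma circle_param_inj s s' : circle_param s = circle_param s' -> s = s'.
Proof.
  intro E. assert (h1 := f_equal fst E). assert (h2 := f_equal snd E). unfold circle_param in h1, h2; simpl in h1, h2.
  assert (k : forall r, r = (2 * r / (1 + r * r)) / (1 + (1 - r * r) / (1 + r * r))).
  { intros r. assert (0 < 1 + r * r) by nra. field. lra. }
  rewrite (k s), (k s'), h1, h2. reflexivity.
Qed.

Lemma circle_param_dist s : dist (circle_param s) one <= 2 * Rabs s.
Proof.
  apply dist_le_dist2. assert (h := Rabs_pos s). lra.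
  replace (2 * Rabs s * (2 * Rabs s)) with (4 * (s * s)) by (rewrite <- (sq_abs_eq s); ring).
  unfold dist2, circle_param, one; simpl. assert (0 < 1 + s * s) by nra.
  replace (((1 - s * s) / (1 + s * s) - 1) * ((1 - s * s) / (1 + s * s) - 1) +
    (2 * s / (1 + s * s) - 0) * (2 * s / (1 + s * s) - 0)) with (4 * (s * s) / (1 + s * s)) by (field; lra).
  unfold Rdiv. assert (0 <= s * s) by nra. assert (/ (1 + s * s) <= 1).
  { rewrite <- Rinv_1. apply Rinv_le_contravar; lra. }
  assert (0 <= 4 * (s * s)) by lra. nra.
Qed.

Lemma arc_uncountable a delta : on_circle a -> 0 < delta ->
  ~ countable_fam (fun y => fst y = snd y /\ on_circle (fst y) /\ dist (fst y) a < delta).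
Proof.
  intros ha hd [en H].
  set (c := fun s => cmul a (circle_param s)).
  (* a parameter of en n, when there is one *)
  set (re := fun n => match excluded_middle_informative (exists s, c s = fst (en n)) with
                      | left h => proj1_sig (constructive_indefinite_description _ h)
                      | right _ => 0 end).
  destruct (interval_not_enumerable re 0 (delta / 4)) as [t [ht hn]]. lra.
  destruct (H (c t, c t)) as [n hs].
  - simpl. split; auto. split. apply on_circle_cmul; auto. apply circle_param_on_circle.
    unfold c. rewrite <- (cmul_one a) at 2. rewrite dist_cmul by auto.
    eapply Rle_lt_trans. apply circle_param_dist. rewrite Rabs_right by lra. lra.
  - assert (E : fst (en n) = c t).
    { unfold same, same_chord in hs; cbn [fst snd] in hs. destruct hs as [[h1 _]|[_ h1]]; symmetry; exact h1. }
    apply (hn n). unfold re. destruct excluded_middle_informative as [h|h].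
    + destruct constructive_indefinite_description as [s hs']. simpl.
      rewrite E in hs'. unfold c in hs'. apply cmul_cancel in hs'; auto. symmetry. apply circle_param_inj; auto.
    + exfalso. apply h. exists t. auto.
Qed.

Lemma arc_infinite a delta : on_circle a -> 0 < delta ->
  ~ finite_fam (fun y => fst y = snd y /\ on_circle (fst y) /\ dist (fst y) a < delta).
Proof. intros h1 h2 hf. apply (arc_uncountable a delta h1 h2), finite_countable, hf. Qed.

(** * Thick leaves *)

Lemma union_closed_of_limit_closed (L : pt -> pt -> Prop) :
  (forall x, leaf L x -> on_circle_ch x) ->
  (forall u l, (forall n, leaf L (u n)) -> cvc u l -> leaf L l) -> closed_set (lam_union L).
Proof.
  intros hc hlim z hz.
  assert (near : forall n : nat, exists p : chord * R, leaf L (fst p) /\ 0 <= snd p <= 1 /\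
                   dist z (cvx (snd p) (fst (fst p)) (snd (fst p))) < / INR (S n)).
  { intro n. destruct (hz _ (inv_S_pos n)) as [w [[a [b [hab [t [ht ->]]]]] hw]].
    exists ((a, b), t). auto. }
  destruct (choice _ near) as [P HP].
  destruct (extract_ch (fun n => fst (P n))) as [p1 [hp1 [l hl]]]; [intro n; apply hc, HP|].
  destruct (extract_real (fun n => snd (P (p1 n)))) as [p2 [hp2 [t ht]]].
  { intro n. destruct (HP (p1 n)) as [_ [h _]]. lra. }
  set (phi := fun n => p1 (p2 n)). assert (hphi : incr phi) by (unfold phi; apply incr_comp; auto).
  assert (cl : cvc (fun n => fst (P (phi n))) l) by (apply (cvc_sub (fun n => fst (P (p1 n)))); auto).
  assert (t01 : 0 <= t <= 1).
  { split; [apply (cv_ge (fun n => snd (P (phi n))) t 0 O)|apply (cv_le (fun n => snd (P (phi n))) t 1 O)];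
      try exact ht; intros; apply HP. }
  (* the chosen points converge both to z and to the point of parameter t on l *)
  set (w := fun n => cvx (snd (P (phi n))) (fst (fst (P (phi n)))) (snd (fst (P (phi n))))).
  assert (C1 : cvp w (cvx t (fst l) (snd l))).
  { destruct cl as [[c1 c2] [c3 c4]]. unfold w, cvx. split; simpl;
      apply CV_plus; apply CV_mult; auto; try (apply CV_minus; auto; apply cv_const). }
  assert (C2 : cvp w z).
  { apply cvp_dist. intros e he. destruct (inv_S_small e he) as [N HN]. exists N. intros n hn.
    rewrite dist_sym. eapply Rlt_le_trans. apply HP. apply Rlt_le.
    eapply Rle_lt_trans; [|apply (HN n hn)]. apply inv_S_mono. apply incr_ge; auto. }
  rewrite (cvp_uniq _ _ _ C2 C1).
  exists (fst l), (snd l). split; [apply (hlim (fun n => fst (P (phi n))) l); auto; intro; apply HP|].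
  exists t. split; auto.
Qed.

Record smallness := {
  small : (chord -> Prop) -> Prop;
  small_mono : forall S T, small T -> (forall x, S x -> exists y, T y /\ same x y) -> small S;
  small_fibers : forall F S T, small T -> (forall x, S x -> T (F x)) -> fibers_le2 F S -> small S;
  arc_not_small : forall a delta, on_circle a -> 0 < delta ->
     ~ small (fun y => fst y = snd y /\ on_circle (fst y) /\ dist (fst y) a < delta)
}.

Definition countable_smallness : smallness :=
  {| small := countable_fam; small_mono := countable_mono; small_fibers := countable_fibers;
     arc_not_small := arc_uncountable |}.

Definition finite_smallness : smallness :=
  {| small := finite_fam; small_mono := finite_mono; small_fibers := finite_fibers;
     arc_not_small := arc_infinite |}.

Lemma small_sub (Q : smallness) S T : small Q T -> (forall x, S x -> T x) -> small Q S.
Proof. intros h1 h2. apply (small_mono Q S T h1). intros x hx. exists x. split; auto. apply same_refl. Qed.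

Definition nbhd (L : pt -> pt -> Prop) (x : chord) (delta : R) : chord -> Prop :=
  fun y => leaf L y /\ rho x y < delta.

Definition thick (Q : smallness) (L : pt -> pt -> Prop) (x : chord) : Prop :=
  leaf L x /\ forall delta, 0 < delta -> ~ small Q (nbhd L x delta).

(* The same notion, phrased with the Hausdorff distance as in [perfect_part]. *)
Definition thick_part (Q : smallness) (L : pt -> pt -> Prop) (a b : pt) : Prop :=
  L a b /\ forall eps, 0 < eps -> ~ small Q (fun y => leaf L y /\ hclose eps a b (fst y) (snd y)).

Lemma perfect_part_thick_part L : perfect_part L = thick_part countable_smallness L.
Proof.
  apply functional_extensionality. intro a. apply functional_extensionality. intro b.
  apply propositional_extensionality. unfold perfect_part, thick_part. simpl.
  split; intros [h H]; split; auto; intros eps he hc; apply (H eps he).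
  - apply countable_chords_fam. exact hc.
  - apply countable_chords_fam in hc. exact hc.
Qed.

Lemma thick_part_iff Q L a b : lamination L -> (thick_part Q L a b <-> thick Q L (a, b)).
Proof.
  intro hL. split.
  - intros [hab H]. split; [exact hab|]. intros delta hd hs.
    destruct (hclose_rho_eps delta hd) as [eps [he K]].
    apply (H eps he). apply (small_sub Q _ _ hs). intros y [hy hc]. split; auto.
    apply (K (a, b) y); auto; [apply (leaf_on_circle L (a, b) hL hab)|apply (leaf_on_circle L y hL hy)].
  - intros [hab H]. split; [exact hab|]. intros eps he hs. apply (H eps he).
    apply (small_sub Q _ _ hs). intros y [hy hr]. split; auto. apply (rho_hclose (a, b) y eps hr).
Qed.

Lemma thick_swap Q L x : lamination L -> thick Q L x -> thick Q L (swap x).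
Proof.
  intros hL [hx H]. split. apply (proj1 hL), hx.
  intros delta hd hs. apply (H delta hd). apply (small_sub Q _ _ hs).
  intros y [hy hr]. split; auto. rewrite rho_swap_l. exact hr.
Qed.

Lemma thick_limit Q L u l : lamination L -> (forall n, thick Q L (u n)) -> cvc u l -> thick Q L l.
Proof.
  intros hL hu hc. split.
  - apply (leaf_lim L u l hL); auto. intro n; apply (hu n).
  - intros delta hd hs. destruct (cvc_rho u l hc (delta/2)) as [N HN]. lra.
    apply (proj2 (hu N) (delta/2)). lra. apply (small_sub Q _ _ hs).
    intros y [hy hr]. split; auto. specialize (HN N (le_n _)).
    assert (T := rho_triangle l (u N) y). rewrite rho_sym in HN. lra.
Qed.

(* Points of the circle are thick, being limits of the points of an arc. *)
Lemma thick_point Q L a : lamination L -> on_circle a -> thick Q L (a, a).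
Proof.
  intros hL ha. split. apply hL, ha.
  intros delta hd hs. apply (arc_not_small Q a delta ha hd). apply (small_sub Q _ _ hs).
  intros y [e [hy hdist]]. split.
  - unfold leaf. rewrite <- e. apply hL, hy.
  - apply rho_lt_char. left. simpl. rewrite <- e. rewrite dist_sym. auto.
Qed.

Lemma thick_part_lamination Q L : lamination L -> lamination (thick_part Q L).
Proof.
  intro hL. destruct (hL) as [_ [Lcirc [_ [Lnc _]]]].
  split; [|split; [|split; [|split]]].
  - intros a b h. apply (thick_part_iff Q L a b hL) in h. apply (thick_part_iff Q L b a hL).
    apply (thick_swap Q L (a, b) hL h).
  - intros a b [h _]. apply Lcirc, h.
  - intros a ha. apply (thick_part_iff Q L a a hL). apply thick_point; auto.
  - intros a b c e [h1 _] [h2 _]. apply Lnc; auto.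
  - apply union_closed_of_limit_closed.
    + intros x [h _]. apply Lcirc, h.
    + intros u l hu hl. destruct l as [a b]. apply (thick_part_iff Q L a b hL).
      apply (thick_limit Q L u); auto. intro n. destruct (u n) as [p q] eqn:E.
      apply (thick_part_iff Q L p q hL). assert (h := hu n). rewrite E in h. exact h.
Qed.

(** * Images of thick leaves *)

Definition aligned (x : chord) (delta : R) (y : chord) : Prop :=
  dist (fst y) (fst x) < delta /\ dist (snd y) (snd x) < delta.

Lemma rho_aligned x y delta : rho x y < delta -> exists oy, same y oy /\ aligned x delta oy.
Proof.
  intro h. apply rho_lt_char in h. unfold aligned. destruct h as [[h1 h2]|[h1 h2]].
  - exists y. split. apply same_refl. rewrite (dist_sym (fst y)), (dist_sym (snd y)). auto.
  - exists (swap y). split. apply same_swap. simpl. rewrite (dist_sym (fst y)), (dist_sym (snd y)). auto.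
Qed.

Lemma aligned_sigma_inj d x delta y y' : (1 <= d)%nat -> 2 * delta <= / INR d ->
  on_circle_ch y -> on_circle_ch y' -> aligned x delta y -> aligned x delta y' ->
  sigma_ch d y = sigma_ch d y' -> y = y'.
Proof.
  intros hd hr [c1 c2] [c1' c2'] [d1 d2] [d1' d2'] E. unfold sigma_ch in E. injection E as f1 f2.
  assert (t1 := dist_triangle (fst y) (fst x) (fst y')).
  assert (t2 := dist_triangle (snd y) (snd x) (snd y')).
  rewrite (dist_sym (fst x)) in t1. rewrite (dist_sym (snd x)) in t2.
  destruct y as [p1 p2], y' as [q1 q2]; simpl in *. f_equal;
    apply (sigma_locally_injective d); auto; unfold Rdiv; lra.
Qed.

Lemma sigma_ch_fibers d L x delta : (1 <= d)%nat -> lamination L -> 2 * delta <= / INR d ->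
  fibers_le2 (sigma_ch d) (nbhd L x delta).
Proof.
  intros hd hL hr z.
  set (hits := fun w y => nbhd L x delta y /\
                 exists oy, same y oy /\ aligned x delta oy /\ sigma_ch d oy = w).
  assert (U : forall w y y', hits w y -> hits w y' -> same y y').
  { intros w y y' [[hy _] [oy [s1 [a1 e1]]]] [[hy' _] [oy' [s2 [a2 e2]]]].
    assert (on : forall v ov, leaf L v -> same v ov -> on_circle_ch ov).
    { intros v ov hv hs. destruct (leaf_on_circle L v hL hv). destruct v, ov.
      unfold same, same_chord in hs; simpl in *. destruct hs as [[<- <-]|[<- <-]]; split; auto. }
    rewrite (aligned_sigma_inj d x delta oy oy' hd hr (on y oy hy s1) (on y' oy' hy' s2) a1 a2
      ltac:(congruence)) in s1.
    eapply same_trans; eauto. apply same_sym; auto. }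
  assert (Hit : forall y, nbhd L x delta y -> same (sigma_ch d y) z -> hits z y \/ hits (swap z) y).
  { intros y hy hs. destruct (rho_aligned x y delta (proj2 hy)) as [oy [so ao]].
    assert (hs' : same (sigma_ch d oy) z) by (eapply same_trans; [apply same_sym, same_sigma_ch, so|exact hs]).
    destruct hs' as [E|E]; [left|right]; split; auto; exists oy; split; auto; split; auto;
      destruct (sigma_ch d oy), z; simpl in *; destruct E; unfold swap; simpl; congruence. }
  destruct (classic (exists y, hits z y)) as [[x1 h1]|n1];
  destruct (classic (exists y, hits (swap z) y)) as [[x2 h2]|n2];
  [exists x1, x2|exists x1, x1|exists x2, x2|exists x, x];
  intros y hy hs; destruct (Hit y hy hs) as [h|h];
  solve [left; eauto | right; eauto | exfalso; eauto].
Qed.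

(* The image of a thick leaf is thick: leaves near the image pull back to a
   non-small family of leaves near the leaf, with fibres of size two. *)
Lemma thick_image Q d L x : (1 <= d)%nat -> sibling_invariant d L -> thick Q L x ->
  thick Q L (sigma_ch d x).
Proof.
  intros hd hS [hx H]. destruct hS as [hL [S1 _]].
  split. apply S1, hx.
  intros delta hdel hs.
  assert (hD : 0 < INR d) by (apply lt_0_INR; lia).
  set (eta := Rmin (delta / (2 * INR d)) (/ (2 * INR d))).
  assert (he : 0 < eta) by (unfold eta; apply Rmin_pos; [apply Rdiv_lt_0_compat|apply Rinv_0_lt_compat]; lra).
  assert (he1 : eta <= delta / (2 * INR d)) by apply Rmin_l.
  assert (he2 : 2 * eta <= / INR d).
  { assert (eta <= / (2 * INR d)) by apply Rmin_r. rewrite Rinv_mult in H0. lra. }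
  assert (hde : INR d * eta <= delta / 2).
  { apply (Rmult_le_compat_l (INR d)) in he1; [|lra].
    replace (INR d * (delta / (2 * INR d))) with (delta / 2) in he1 by (field; lra). exact he1. }
  apply (H eta he). apply (small_fibers Q (sigma_ch d) _ _ hs); [|apply sigma_ch_fibers; auto].
  intros y [hy hr]. split. apply S1, hy.
  destruct (leaf_on_circle L x hL hx) as [cx1 cx2]. destruct (leaf_on_circle L y hL hy) as [cy1 cy2].
  apply rho_lt_char in hr. apply rho_lt_char. unfold sigma_ch; simpl.
  assert (l1 := cpow_lipschitz (fst x) (fst y) d cx1 cy1).
  assert (l2 := cpow_lipschitz (snd x) (snd y) d cx2 cy2).
  assert (l3 := cpow_lipschitz (fst x) (snd y) d cx1 cy2).
  assert (l4 := cpow_lipschitz (snd x) (fst y) d cx2 cy1).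
  unfold sigma. destruct hr as [[r1 r2]|[r1 r2]]; [left|right]; split; nra.
Qed.

(** * Sibling invariance of the thick part *)

Definition approx_preimages (Q : smallness) (d : nat) (L : pt -> pt -> Prop) : Prop :=
  forall x, thick Q L x -> forall delta, 0 < delta ->
  exists y, thick Q L y /\ rho x (sigma_ch d y) < delta.

Definition approx_siblings (Q : smallness) (d : nat) (L : pt -> pt -> Prop) : Prop :=
  forall x, thick Q L x -> sigma d (fst x) <> sigma d (snd x) -> forall delta, 0 < delta ->
  exists f, sibling_family d L f /\ (forall i, (i < d)%nat -> thick Q L (f i)) /\ rho x (f O) < delta.

Lemma thick_part_images Q d L : (1 <= d)%nat -> sibling_invariant d L ->
  forall a b, thick_part Q L a b -> thick_part Q L (sigma d a) (sigma d b).
Proof.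
  intros hd hS a b h. assert (hL := proj1 hS).
  apply (thick_part_iff Q L _ _ hL). apply (thick_part_iff Q L _ _ hL) in h.
  apply (thick_image Q d L (a, b)); auto.
Qed.

(* Compactness turns approximate preimages into exact ones. *)
Lemma thick_part_preimages Q d L : sibling_invariant d L -> approx_preimages Q d L ->
  forall a b, thick_part Q L a b ->
  exists c e, thick_part Q L c e /\ sigma d c = a /\ sigma d e = b.
Proof.
  intros hS hpre a b h. assert (hL := proj1 hS). apply (thick_part_iff Q L _ _ hL) in h.
  destruct (choice _ (fun n => hpre (a, b) h _ (inv_S_pos n))) as [y Hy].
  destruct (extract_ch y) as [phi [hphi [l hl]]].
  { intro n. apply (leaf_on_circle L); auto. apply (Hy n). }
  assert (Tl : thick Q L l) by (apply (thick_limit Q L (fun n => y (phi n))); auto; intro; apply Hy).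
  assert (S0 : same (a, b) (sigma_ch d l)).
  { apply (rho_lim_zero (fun n => sigma_ch d (y (phi n)))). apply cvc_sc, hl.
    intro n. eapply Rlt_le_trans. apply Hy. apply inv_S_mono, incr_ge, hphi. }
  destruct l as [c e]. unfold same, same_chord, sigma_ch in S0; simpl in S0.
  destruct S0 as [[e1 e2]|[e1 e2]].
  - exists c, e. split; auto. apply (thick_part_iff Q L _ _ hL), Tl.
  - exists e, c. split; auto. apply (thick_part_iff Q L _ _ hL). apply (thick_swap Q L (c, e) hL Tl).
Qed.

(* Sibling families of leaves with non-degenerate image, by compactness and
   sibling_family_limit. *)
Lemma thick_siblings Q d L : (1 <= d)%nat -> lamination L -> approx_siblings Q d L ->
  forall x, thick Q L x -> sigma d (fst x) <> sigma d (snd x) ->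
  exists f, same (f O) x /\ sibling_family d L f /\ forall i, (i < d)%nat -> thick Q L (f i).
Proof.
  intros hd hL hsib x hx hne.
  destruct (choice _ (fun n => hsib x hx hne _ (inv_S_pos n))) as [g Hg].
  destruct (extract_family g d) as [phi [hphi [h Hh]]].
  { intros n i hi. apply (leaf_on_circle L); auto. apply (proj1 (Hg n)), hi. }
  assert (S0 : same x (h O)).
  { apply (rho_lim_zero (fun n => g (phi n) O)). apply Hh. lia.
    intro n. eapply Rlt_le_trans. apply Hg. apply inv_S_mono, incr_ge, hphi. }
  exists h. split; [apply same_sym, S0|split].
  - apply (sibling_family_limit d L (fun n => g (phi n))); auto. intro n; apply Hg.
    destruct x as [p q], (h O) as [p' q']. unfold same, same_chord in S0; simpl in *.
    destruct S0 as [[<- <-]|[<- <-]]; auto.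
  - intros i hi. apply (thick_limit Q L (fun n => g (phi n) i)); auto. intro n. apply Hg, hi.
Qed.

Lemma thick_part_siblings Q d L : (2 <= d)%nat -> sibling_invariant d L -> approx_siblings Q d L ->
  forall a b, thick_part Q L a b -> ~ critical d a b ->
  exists f : nat -> pt * pt, f O = (a, b) /\
    (forall i, (i < d)%nat -> thick_part Q L (fst (f i)) (snd (f i))) /\
    (forall i j, (i < d)%nat -> (j < d)%nat -> i <> j -> disjoint_chords (f i) (f j)) /\
    (forall i, (i < d)%nat ->
       same_chord (sigma d (fst (f i))) (sigma d (snd (f i))) (sigma d a) (sigma d b)).
Proof.
  intros hd hS hsib a b h hnc. destruct hS as [hL [_ [_ S3]]].
  assert (thick_of : forall x, thick Q L x -> thick_part Q L (fst x) (snd x))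
    by (intros [p q] hx; apply (thick_part_iff Q L p q hL), hx).
  apply (thick_part_iff Q L _ _ hL) in h.
  destruct (classic (a = b)) as [<-|hab].
  - (* a degenerate leaf: the siblings in L are points of the circle, which are thick *)
    destruct (S3 a a (proj1 h) hnc) as [f' [f0 [fl [fd fs]]]].
    exists (fun i => (fst (f' i), fst (f' i))). split; [rewrite f0; reflexivity|].
    split; [|split].
    + intros i hi. apply (thick_of (_, _)). apply thick_point; auto.
      apply ((proj1 (proj2 hL)) _ _ (fl i hi)).
    + intros i j hi hj hij [z [h1 h2]]. simpl in *. apply seg_pt in h1. apply seg_pt in h2.
      apply (fd i j hi hj hij). exists (fst (f' i)). split. apply seg_left. rewrite <- h1, h2. apply seg_left.
    + intros i hi. simpl. destruct (fs i hi) as [[e1 e2]|[e1 e2]]; left; auto.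
  -
    assert (hne : sigma d a <> sigma d b) by (intro E; apply hnc; split; auto).
    destruct (thick_siblings Q d L ltac:(lia) hL hsib (a, b) h hne) as [hh [S0 [[Hl [Hd Hsc]] Th]]].
    exists (fun i => if Nat.eqb i O then (a, b) else hh i). split; [reflexivity|]. split; [|split].
    + intros i hi. destruct (Nat.eqb_spec i O); apply thick_of; [apply h|apply Th, hi].
    + intros i j hi hj hij. destruct (Nat.eqb_spec i O), (Nat.eqb_spec j O); try lia.
      * subst i. apply (disjoint_same _ (hh O)). apply same_sym, S0. apply Hd; auto; lia.
      * subst j. apply disjoint_sym. apply (disjoint_same _ (hh O)). apply same_sym, S0. apply Hd; auto; lia.
      * apply Hd; auto.
    + intros i hi. change (same (sigma_ch d (if Nat.eqb i O then (a, b) else hh i)) (sigma_ch d (a, b))).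
      destruct (Nat.eqb_spec i O). apply same_refl.
      eapply same_trans. apply Hsc, hi. apply same_sigma_ch, S0.
Qed.

Theorem thick_part_sibling_invariant Q d L : (2 <= d)%nat -> sibling_invariant d L ->
  approx_preimages Q d L -> approx_siblings Q d L -> sibling_invariant d (thick_part Q L).
Proof.
  intros hd hS hpre hsib.
  split; [apply thick_part_lamination, hS|]. split; [|split].
  - apply thick_part_images; auto. lia.
  - apply thick_part_preimages; auto.
  - apply thick_part_siblings; auto.
Qed.

(** * Leaves near a leaf with non-degenerate image *)

(* Leaves closer than eta to x, where sigma_d moves distances by at most d,
   still have non-degenerate image. *)
Lemma image_nondegenerate_near d x y eta : on_circle_ch x -> on_circle_ch y -> rho x y <= eta ->
  2 * INR d * eta < dist (sigma d (fst x)) (sigma d (snd x)) -> sigma d (fst y) <> sigma d (snd y).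
Proof.
  intros [cx1 cx2] [cy1 cy2] hr hlt E. apply rho_le_char in hr.
  assert (l1 := cpow_lipschitz (fst x) (fst y) d cx1 cy1).
  assert (l2 := cpow_lipschitz (snd x) (snd y) d cx2 cy2).
  assert (l3 := cpow_lipschitz (fst x) (snd y) d cx1 cy2).
  assert (l4 := cpow_lipschitz (snd x) (fst y) d cx2 cy1).
  unfold sigma in *. rewrite E in l1, l4.
  assert (t1 := dist_triangle (cpow (fst x) d) (cpow (snd y) d) (cpow (snd x) d)).
  rewrite (dist_sym (cpow (snd y) d) (cpow (snd x) d)) in t1.
  assert (0 <= INR d) by apply pos_INR.
  destruct hr as [[r1 r2]|[r1 r2]];
    apply (Rmult_le_compat_l (INR d)) in r1; auto; apply (Rmult_le_compat_l (INR d)) in r2; auto; lra.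
Qed.

Lemma good_radius d x : (1 <= d)%nat -> sigma d (fst x) <> sigma d (snd x) -> forall delta, 0 < delta ->
  exists eta, 0 < eta /\ eta <= delta /\ 2 * eta <= / INR d /\
     2 * INR d * eta < dist (sigma d (fst x)) (sigma d (snd x)).
Proof.
  intros hd hne delta hdel.
  assert (hD : 0 < INR d) by (apply lt_0_INR; lia).
  set (D := dist (sigma d (fst x)) (sigma d (snd x))).
  assert (hDp : 0 < D) by (apply dist_pos, hne).
  set (eta := Rmin delta (Rmin (/ (2 * INR d)) (D / (4 * INR d)))).
  assert (m1 := Rmin_l delta (Rmin (/ (2 * INR d)) (D / (4 * INR d)))).
  assert (m2 := Rmin_r delta (Rmin (/ (2 * INR d)) (D / (4 * INR d)))).
  assert (m3 := Rmin_l (/ (2 * INR d)) (D / (4 * INR d))).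
  assert (m4 := Rmin_r (/ (2 * INR d)) (D / (4 * INR d))).
  fold eta in m1, m2.
  assert (p1 : 0 < / (2 * INR d)) by (apply Rinv_0_lt_compat; lra).
  assert (p2 : 0 < D / (4 * INR d)) by (apply Rdiv_lt_0_compat; lra).
  exists eta. split; [unfold eta; repeat apply Rmin_pos; auto|]. split; auto. split.
  - assert (/ (2 * INR d) = / 2 * / INR d) by (field; lra). lra.
  - assert (E : 2 * INR d * (D / (4 * INR d)) = D / 2) by (field; lra).
    assert (2 * INR d * eta <= 2 * INR d * (D / (4 * INR d))) by (apply Rmult_le_compat_l; lra). lra.
Qed.

Lemma preimage_choice d L : sibling_invariant d L ->
  exists P : chord -> chord, forall y, leaf L y -> leaf L (P y) /\ sigma_ch d (P y) = y.
Proof.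
  intros [_ [_ [S2 _]]].
  apply (choice (fun y p => leaf L y -> leaf L p /\ sigma_ch d p = y)). intro y.
  destruct (classic (leaf L y)) as [h|h]; [|exists y; intro; contradiction].
  destruct (S2 _ _ h) as [c [e [h1 [h2 h3]]]]. exists (c, e). intros _. split; auto.
  unfold sigma_ch; simpl. rewrite h2, h3. destruct y; reflexivity.
Qed.

Lemma sibling_choice d L x eta : sibling_invariant d L -> on_circle_ch x ->
  2 * INR d * eta < dist (sigma d (fst x)) (sigma d (snd x)) ->
  exists F : chord -> nat -> chord,
    forall y, nbhd L x eta y -> F y O = y /\ sibling_family d L (F y).
Proof.
  intros [hL [_ [_ S3]]] cx he.
  apply (choice (fun y f => nbhd L x eta y -> f O = y /\ sibling_family d L f)). intro y.
  destruct (classic (nbhd L x eta y)) as [[hy hr]|h]; [|exists (fun _ => y); intro; contradiction].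
  assert (nc : ~ critical d (fst y) (snd y)).
  { intros [_ E]. apply (image_nondegenerate_near d x y eta cx (leaf_on_circle L y hL hy)); auto. lra. }
  destruct (S3 _ _ hy nc) as [f [f0 [fl [fdis fs]]]]. exists f. intros _. split.
  rewrite f0; destruct y; reflexivity. split; [exact fl|split; [exact fdis|]].
  intros i hi. rewrite f0. apply fs, hi.
Qed.

(** * The countable case *)

Lemma fibers_compose F G S H : fibers_le2 G S ->
  (forall y z, S y -> same (F y) z -> same (G y) (H z)) -> fibers_le2 F S.
Proof.
  intros hG hc z. destruct (hG (H z)) as [x1 [x2 K]]. exists x1, x2. intros x hx hs. apply K; auto.
Qed.

Lemma non_thick_countable L : lamination L ->
  countable_fam (fun p => leaf L p /\ ~ thick countable_smallness L p).
Proof.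
  intros hL. apply locally_countable_countable. intros p [hp hn].
  apply NNPP. intro K. apply hn. split; auto. intros delta hd hs. apply K. exists delta. split; auto.
  apply (countable_sub _ _ hs). intros y [[hy _] hr]. split; auto.
Qed.

Lemma approx_preimages_countable d L : sibling_invariant d L -> approx_preimages countable_smallness d L.
Proof.
  intros hS x [hx H] delta hd. destruct (preimage_choice d L hS) as [P HP].
  apply NNPP. intro K. apply (H delta hd). simpl.
  (* otherwise the chosen preimages of the leaves near x are non-thick, hence countable *)
  apply (countable_fibers P _ _ (non_thick_countable L (proj1 hS))).
  - intros y [hy hr]. destruct (HP y hy) as [h1 h2]. split; auto. intro hb. apply K.
    exists (P y). split; auto. rewrite h2. exact hr.
  - intro z. exists (sigma_ch d z), (sigma_ch d z). intros y [hy _] hs. left.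
    destruct (HP y hy) as [_ h2]. rewrite <- h2. apply same_sigma_ch, hs.
Qed.

Lemma approx_siblings_countable d L : (2 <= d)%nat -> sibling_invariant d L ->
  approx_siblings countable_smallness d L.
Proof.
  intros hd hS x [hx H] hne delta hdel. assert (hL := proj1 hS).
  assert (cx := leaf_on_circle L x hL hx).
  destruct (good_radius d x ltac:(lia) hne delta hdel) as [eta [he [he1 [he2 he3]]]].
  destruct (sibling_choice d L x eta hS cx he3) as [F HF].
  assert (Bad : countable_fam (fun y => exists i, (i < d)%nat /\ nbhd L x eta y /\
                                                  ~ thick countable_smallness L (F y i))).
  { apply countable_union. intro i.
    apply (countable_fibers (fun y => F y i) _ _ (non_thick_countable L hL)).
    - intros y [hi [hy hn]]. destruct (HF y hy) as [_ [fl _]]. split; auto.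
    - apply (fibers_compose _ (sigma_ch d) _ (sigma_ch d)).
      + intro z. destruct (sigma_ch_fibers d L x eta ltac:(lia) hL he2 z) as [x1 [x2 K]].
        exists x1, x2. intros y [_ [hy _]]. apply K, hy.
      + intros y z [hi [hy _]] hs. destruct (HF y hy) as [f0 [_ [_ fs]]].
        rewrite <- f0. eapply same_trans. apply same_sym, fs, hi. apply same_sigma_ch, hs. }
  (* the neighbourhood of x being uncountable, some leaf in it has thick siblings *)
  apply NNPP. intro K. apply (H eta he). simpl.
  apply (countable_sub _ _ Bad). intros y hy. apply NNPP. intro hn. apply K.
  destruct (HF y hy) as [f0 hf]. exists (F y). split; auto. split.
  - intros i hi. apply NNPP. intro hb. apply hn. exists i. auto.
  - rewrite f0. destruct hy. lra.
Qed.

(** * The finite case *)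

Lemma limit_of_distinct_not_finite L u l : cvc u l -> (forall i j, (i < j)%nat -> ~ same (u i) (u j)) ->
  (forall n, leaf L (u n)) -> forall e, 0 < e -> ~ finite_fam (nbhd L l e).
Proof.
  intros hc hd hu e he. destruct (cvc_rho u l hc e he) as [N HN].
  apply (distinct_seq_not_finite _ (fun k => u (N + k)%nat)).
  - intros i j hij. apply hd. lia.
  - intro i. split. apply hu. rewrite rho_sym. apply HN. lia.
Qed.

Lemma infinite_distinct_images F S : ~ finite_fam S -> fibers_le2 F S ->
  exists y : nat -> chord, (forall n, S (y n)) /\ forall i j, (i < j)%nat -> ~ same (F (y i)) (F (y j)).
Proof.
  intros NS hF.
  destruct (choose_seq (fun n g z => S z /\ forall i, (i < n)%nat -> ~ same (F z) (F (g i)))) as [y Hy].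
  - intros n f f' z E [h1 h2]. split; auto. intros i hi. rewrite <- E; auto.
  - (* the members of S whose image is among n given images form a finite family *)
    intros n f. apply NNPP. intro K. apply NS.
    apply (finite_fibers F S (fun w => exists i, (i < n)%nat /\ same w (F (f i)))); auto.
    + exists n, (fun i => F (f i)). intros w [i [hi hw]]. exists i. auto.
    + intros z hz. apply NNPP. intro K2. apply K. exists z. split; auto. intros i hi hs. apply K2. eauto.
  - exists y. split; [apply Hy|]. intros i j hij hs. apply (proj2 (Hy j) i hij), same_sym, hs.
Qed.

(* Preimages of infinitely many distinct leaves near x accumulate on a
   non-isolated leaf whose image is near x. *)
Lemma approx_preimages_finite d L : sibling_invariant d L -> approx_preimages finite_smallness d L.
Proof.
  intros hS x [hx H] delta hd. assert (hL := proj1 hS).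
  destruct (preimage_choice d L hS) as [P HP].
  destruct (infinite_distinct_images (fun z => z) (nbhd L x (delta / 2))) as [y [Sy Dy]];
    [apply H; lra|intro z; exists z, z; intros; left; auto|].
  set (p := fun n => P (y n)).
  assert (Hp : forall n, leaf L (p n) /\ sigma_ch d (p n) = y n) by (intro n; apply HP, (Sy n)).
  assert (Dp : forall i j, (i < j)%nat -> ~ same (p i) (p j)).
  { intros i j hij hs. apply (Dy i j hij).
    rewrite <- (proj2 (Hp i)), <- (proj2 (Hp j)). apply same_sigma_ch, hs. }
  destruct (extract_ch p) as [phi [hphi [l hl]]].
  { intro n. apply (leaf_on_circle L); auto. apply Hp. }
  exists l. split.
  - split. apply (leaf_lim L (fun n => p (phi n))); auto. intro; apply Hp.
    apply (limit_of_distinct_not_finite L (fun n => p (phi n))); auto.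
    + intros i j hij. apply Dp. apply incr_lt; auto.
    + intro; apply Hp.
  - assert (rho x (sigma_ch d l) <= delta / 2); [|lra].
    apply (rho_lim_le (fun n => sigma_ch d (p (phi n))) _ _ _ O). apply cvc_sc, hl.
    intros n _. rewrite (proj2 (Hp (phi n))). apply Rlt_le, (Sy (phi n)).
Qed.

(* Sibling families of infinitely many leaves near x with distinct images
   accumulate on a sibling family of non-isolated leaves. *)
Lemma approx_siblings_finite d L : (2 <= d)%nat -> sibling_invariant d L ->
  approx_siblings finite_smallness d L.
Proof.
  intros hd hS x [hx H] hne delta hdel. assert (hL := proj1 hS).
  assert (cx := leaf_on_circle L x hL hx).
  destruct (good_radius d x ltac:(lia) hne (delta/2) ltac:(lra)) as [eta [he [he1 [he2 he3]]]].
  set (S := nbhd L x eta).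
  destruct (sibling_choice d L x eta hS cx he3) as [F HF].
  assert (fS : fibers_le2 (sigma_ch d) S) by (apply sigma_ch_fibers; auto; lia).
  destruct (infinite_distinct_images (sigma_ch d) S (H eta he) fS) as [y [Sy Dy]].
  set (g := fun n => F (y n)).
  assert (Hg : forall n, g n O = y n /\ sibling_family d L (g n)) by (intro n; apply HF, (Sy n)).
  destruct (extract_family g d) as [phi [hphi [h Hh]]].
  { intros n i hi. apply (leaf_on_circle L); auto. apply (proj1 (proj2 (Hg n))), hi. }
  assert (R0 : rho x (h O) <= eta).
  { apply (rho_lim_le (fun n => g (phi n) O) _ _ _ O). apply Hh. lia.
    intros n _. rewrite (proj1 (Hg (phi n))). apply Rlt_le, (Sy (phi n)). }
  assert (Sh : sibling_family d L h).
  { assert (ch0 : on_circle_ch (h O)).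
    { apply (leaf_on_circle L _ hL). apply (leaf_lim L (fun n => g (phi n) O)); auto.
      intro n; apply (proj1 (proj2 (Hg (phi n)))). lia. apply Hh. lia. }
    apply (sibling_family_limit d L (fun n => g (phi n))); auto. lia. intro; apply Hg.
    exact (image_nondegenerate_near d x (h O) eta cx ch0 R0 he3). }
  exists h. split; [exact Sh|]. split; [|lra].
  intros i hi. split. apply (proj1 Sh), hi.
  apply (limit_of_distinct_not_finite L (fun n => g (phi n) i) (h i) (Hh i hi)).
  - (* distinct images force distinct siblings *)
    intros a b hab hs. apply (Dy (phi a) (phi b)). apply incr_lt; auto.
    destruct (Hg (phi a)) as [ea [_ [_ sa]]]. destruct (Hg (phi b)) as [eb [_ [_ sb]]].
    rewrite <- ea, <- eb. eapply same_trans. apply same_sym, sa, hi.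
    eapply same_trans. apply same_sigma_ch, hs. apply sb, hi.
  - intro n. apply (proj1 (proj2 (Hg (phi n)))), hi.
Qed.

(** * Isolated leaves *)

(* A leaf that is a Hausdorff limit of other leaves has infinite neighbourhoods:
   a finite neighbourhood would leave a gap around the leaf. *)
Lemma not_isolated_thick L a b : lamination L -> L a b -> ~ isolated L a b ->
  thick finite_smallness L (a, b).
Proof.
  intros hL hab hlim. apply NNPP in hlim. split; [exact hab|]. intros delta hd [k [en Hk]].
  (* eta: below delta and below the distance to every enumerated chord other than (a, b) *)
  assert (gap : forall m, exists eta, 0 < eta /\ eta <= delta /\
            forall n, (n < m)%nat -> ~ same (en n) (a, b) -> eta <= rho (a, b) (en n)).
  { intro m. induction m as [|m [e0 [he0 [hed H0]]]].
    - exists delta. split; [lra|]. split; [lra|]. intros; lia.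
    - destruct (classic (same (en m) (a, b))) as [hs|hs].
      + exists e0. split; auto. split; auto. intros n hn hns.
        destruct (Nat.eq_dec n m); [subst; contradiction|]. apply H0; auto. lia.
      + assert (hp := rho_pos_not_same (a, b) (en m) (fun E => hs (same_sym _ _ E))).
        exists (Rmin e0 (rho (a, b) (en m))). split; [apply Rmin_pos; auto|].
        split; [eapply Rle_trans; [apply Rmin_l|auto]|].
        intros n hn hns. destruct (Nat.eq_dec n m); [subst; apply Rmin_r|].
        eapply Rle_trans. apply Rmin_l. apply H0; auto. lia. }
  destruct (gap k) as [eta [he [hed Heta]]].
  destruct (hclose_rho_eps eta he) as [eps [heps K]].
  destruct (hlim eps heps) as [c [e [hce [hns hcl]]]].
  assert (hr : rho (a, b) (c, e) < eta).
  { apply K; auto; [apply (leaf_on_circle L (a, b) hL hab)|apply (leaf_on_circle L (c, e) hL hce)]. }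
  destruct (Hk (c, e)) as [n [hn hs]]; [split; auto; lra|].
  assert (hn' : ~ same (en n) (a, b)).
  { intro E. apply hns. assert (E' := same_trans _ _ _ hs E). unfold same in E'; simpl in E'.
    destruct E' as [[-> ->]|[-> ->]]; [left|right]; auto. }
  assert (X := Heta n hn hn'). assert (t := rho_triangle (a, b) (c, e) (en n)).
  rewrite (same_rho _ _ hs) in t. lra.
Qed.

Lemma avoiding_sub_ball L l r c : leaf L l -> 0 < r -> ~ finite_fam (nbhd L l (r / 2)) ->
  exists l' r', leaf L l' /\ 0 < r' /\ r' <= r / 4 /\ rho l l' < r / 2 /\
    forall y, rho l' y <= r' -> ~ same y c.
Proof.
  intros hl hr hnf.
  destruct (not_finite_avoid _ hnf 1 (fun _ => c)) as [l' [[hl' hr'] hav]].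
  assert (hp : 0 < rho l' c) by (apply rho_pos_not_same, (hav O); lia).
  exists l', (Rmin (r / 4) (rho l' c / 2)).
  assert (m1 := Rmin_l (r / 4) (rho l' c / 2)). assert (m2 := Rmin_r (r / 4) (rho l' c / 2)).
  split; auto. split; [apply Rmin_pos; lra|]. split; auto. split; auto.
  intros y hy hs. assert (t := rho_triangle l' y c). rewrite (same_rho _ _ hs) in t. lra.
Qed.

Lemma nondegenerate_near a b y : a <> b -> rho (a, b) y <= dist a b / 4 -> fst y <> snd y.
Proof.
  intros hab hr E. apply rho_le_char in hr. simpl in hr.
  assert (hD := dist_pos a b hab).
  assert (t := dist_triangle a (fst y) b). rewrite E in t, hr.
  rewrite (dist_sym (snd y) b) in t. lra.
Qed.

Definition admissible_ball (L : pt -> pt -> Prop) (a b : pt) (p : chord * R) : Prop :=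
  leaf L (fst p) /\ 0 < snd p /\ rho (a, b) (fst p) + snd p <= dist a b / 4.

Lemma admissible_shrink L a b c p : a <> b ->
  (forall x, leaf L x -> fst x <> snd x -> forall delta, 0 < delta -> ~ finite_fam (nbhd L x delta)) ->
  admissible_ball L a b p -> exists p', admissible_ball L a b p' /\ snd p' <= snd p / 4 /\
    rho (fst p) (fst p') < snd p / 2 /\ forall y, rho (fst p') y <= snd p' -> ~ same y c.
Proof.
  intros hne Hinf [hl [hr hlr]]. destruct p as [l r]. simpl in hl, hr, hlr |- *.
  assert (nd : fst l <> snd l).
  { apply (nondegenerate_near a b); auto. assert (h := rho_nonneg (a, b) l). lra. }
  destruct (avoiding_sub_ball L l r c hl hr (Hinf l hl nd (r / 2) ltac:(lra)))
    as [l' [r' [hl' [hr' [hr'4 [hll' hav]]]]]].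
  exists (l', r'). split; [|auto]. split; auto. split; auto. simpl.
  assert (t := rho_triangle (a, b) l l'). lra.
Qed.

(* Otherwise, nested balls
   around nondegenerate leaves, the n-th avoiding the n-th leaf of an
   enumeration, shrink to a leaf which is none of the enumerated leaves. *)
Lemma countable_lamination_isolated_leaf L a b : lamination L -> countable_lam L -> L a b -> a <> b ->
  exists x, leaf L x /\ fst x <> snd x /\ exists delta, 0 < delta /\ finite_fam (nbhd L x delta).
Proof.
  intros hL hc hab hne. apply NNPP. intro Hnf.
  assert (Hinf : forall x, leaf L x -> fst x <> snd x -> forall delta, 0 < delta -> ~ finite_fam (nbhd L x delta))
    by (intros x hx hnx delta hd hf; apply Hnf; exists x; eauto).
  apply countable_chords_fam in hc. destruct hc as [en Hen].
  assert (Step : forall (kp : nat * (chord * R)), exists p', admissible_ball L a b (snd kp) ->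
     admissible_ball L a b p' /\ snd p' <= snd (snd kp) / 4 /\ rho (fst (snd kp)) (fst p') < snd (snd kp) / 2 /\
     forall y, rho (fst p') y <= snd p' -> ~ same y (en (fst kp))).
  { intros [k p]. destruct (classic (admissible_ball L a b p)) as [h|h]; [|exists p; intro; contradiction].
    destruct (admissible_shrink L a b (en k) p hne Hinf h) as [p' hp']. exists p'. auto. }
  destruct (choice _ Step) as [st Hst].
  set (sq := fix sq n := match n with O => ((a, b), dist a b / 4) | S k => st (k, sq k) end).
  assert (Q0 : forall n, admissible_ball L a b (sq n)).
  { induction n; [|exact (proj1 (Hst (n, sq n) IHn))].
    split; simpl; [exact hab|]. split; [assert (h := dist_pos a b hne); lra|]. rewrite rho_refl. lra. }
  assert (HS : forall n, snd (sq (S n)) <= snd (sq n) / 4 /\ rho (fst (sq n)) (fst (sq (S n))) < snd (sq n) / 2 /\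
     forall y, rho (fst (sq (S n))) y <= snd (sq (S n)) -> ~ same y (en n))
    by (intro n; exact (proj2 (Hst (n, sq n) (Q0 n)))).
  assert (Nest : forall k m, (k <= m)%nat -> rho (fst (sq k)) (fst (sq m)) + snd (sq m) <= snd (sq k)).
  { intros k m hkm. induction hkm; [rewrite rho_refl; lra|].
    destruct (HS m) as [h1 [h2 _]]. assert (t := rho_triangle (fst (sq k)) (fst (sq m)) (fst (sq (S m)))).
    destruct (Q0 m) as [_ [hp _]]. unfold chord in *. lra. }
  destruct (extract_ch (fun n => fst (sq n))) as [phi [hphi [l hl]]].
  { intro n. apply (leaf_on_circle L); auto. apply (Q0 n). }
  assert (Ll : leaf L l) by (apply (leaf_lim L (fun n => fst (sq (phi n)))); auto; intro n; apply (Q0 (phi n))).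
  assert (Near : forall k, rho (fst (sq k)) l <= snd (sq k)).
  { intro k. apply (rho_lim_le (fun n => fst (sq (phi n))) l _ _ k hl).
    intros n hn. assert (X := incr_ge phi hphi n). assert (C := Nest k (phi n) ltac:(lia)).
    destruct (Q0 (phi n)) as [_ [hp _]]. unfold chord in *. lra. }
  assert (nd : fst l <> snd l).
  { apply (nondegenerate_near a b); auto. assert (h := Near O). simpl in h. lra. }
  destruct (Hen l (conj Ll nd)) as [n hn].
  destruct (HS n) as [_ [_ h3]]. exact (h3 l (Near (S n)) hn).
Qed.

(** * Perfect parts and chiefs *)

Lemma perfect_part_sibling_invariant d L : (2 <= d)%nat -> sibling_invariant d L ->
  sibling_invariant d (perfect_part L).
Proof.
  intros hd hS. rewrite perfect_part_thick_part. apply thick_part_sibling_invariant; auto.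
  - apply approx_preimages_countable; auto.
  - apply approx_siblings_countable; auto.
Qed.

Lemma non_isolated_part_sibling_invariant d L : (2 <= d)%nat -> sibling_invariant d L ->
  sibling_invariant d (thick_part finite_smallness L).
Proof.
  intros hd hS. apply thick_part_sibling_invariant; auto.
  - apply approx_preimages_finite; auto.
  - apply approx_siblings_finite; auto.
Qed.

(* If no nondegenerate leaf is a condensation leaf, the lamination is countable. *)
Lemma uncountable_perfect_part_nonempty L : lamination L -> ~ countable_lam L ->
  nonempty_lam (perfect_part L).
Proof.
  intros hL hc. apply NNPP. intro hn. apply hc. apply countable_chords_fam.
  apply (countable_sub _ _ (non_thick_countable L hL)). intros [a b] [hab hne]. split; [exact hab|].
  intro ht. apply hn. exists a, b. split; auto.
  rewrite perfect_part_thick_part. apply (thick_part_iff _ L a b hL), ht.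
Qed.

Lemma perfect_part_not_isolated L a b : perfect_part L a b -> ~ isolated L a b.
Proof.
  intros [_ H] hiso. apply hiso. intros eps he. apply NNPP. intro K. apply (H eps he).
  (* otherwise the leaves eps-close to ab are ab itself *)
  exists (fun _ => (a, b)). intros c e [hce hcl]. exists O. simpl.
  apply NNPP. intro K2. apply K. exists c, e. split; auto. split; auto.
  intro hs. apply K2. destruct hs as [[-> ->]|[-> ->]]; [left|right]; auto.
Qed.

Theorem lemmal (d : nat) (hd : (2 <= d)%nat) :
  (forall L, sibling_invariant d L -> sibling_invariant d (perfect_part L)) /\
  (forall L, sibling_invariant d L -> ~ countable_lam L -> nonempty_lam (perfect_part L)) /\
  (forall L, chief d L -> perfect L \/ countable_lam L) /\
  (forall L, chief d L -> countable_lam L ->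
     forall a b, L a b -> a <> b -> isolated L a b).
Proof.
  split; [|split; [|split]].
  - intros L hS. apply perfect_part_sibling_invariant; auto.
  - intros L hS hc. apply uncountable_perfect_part_nonempty; auto. apply hS.
  - (* an uncountable chief equals its perfect part *)
    intros L [hS [hne Hmin]]. destruct (classic (countable_lam L)) as [hc|hc]; [right; exact hc|left].
    assert (Sub : forall a b, L a b -> perfect_part L a b).
    { apply Hmin; [apply perfect_part_sibling_invariant; auto
                  |apply uncountable_perfect_part_nonempty; auto; apply hS
                  |intros a b [h _]; exact h]. }
    intros a b hab _. apply perfect_part_not_isolated, Sub, hab.
  - (* a chief with a non-isolated leaf equals its non-isolated part, and then
       cannot be countable by the Baire argument *)
    intros L [hS [hne Hmin]] hc a b hab hn hlim. assert (hL := proj1 hS).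
    assert (Sub : forall x y, L x y -> thick_part finite_smallness L x y).
    { apply Hmin; [apply non_isolated_part_sibling_invariant; auto| |intros x y [h _]; exact h].
      exists a, b. split; auto. apply (thick_part_iff _ L a b hL), not_isolated_thick; auto. }
    destruct (countable_lamination_isolated_leaf L a b hL hc hab hn) as [[p q] [hx [hnx [delta [hd' hf]]]]].
    apply (thick_part_iff _ L p q hL) in Sub; [|exact hx]. exact (proj2 Sub delta hd' hf).
Qed.
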